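(* Let the data $\eta,Q_g,\Psi,c_{max},\theta_s$ be as in the context, and let the pyrolysis heat $Q_p$ satisfy $-Q_g<Q_p<0$. Then there exists exactly one $c\in[c_{max},0]$ for which the interface problem (P$_c$) described in the context admits a solution $\theta$.
   Context: Dimensionless travelling-wave formulation of a solid-propellant combustion model ($x<0$ inert solid, $x>0$ gas, interface at $x=0$; $\theta$ dimensionless temperature; $c<0$ dimensionless regression velocity). Data: $\eta>0$; gas reaction heat $Q_g>0$; pyrolysis heat $Q_p\in\mathbb R$; $\Psi:[0,1]\to[0,\infty)$ of class $C^\infty$ with $\Psi(\theta)>0$ for $\theta\in[0,1)$ and $\Psi(1)=0$; a number $c_{max}<0$ and a surface-temperature map $\theta_s:[c_{max},0]\to[0,1]$ (inverse of a pyrolysis law with cut-off at the initial temperature) that is continuous and strictly decreasing with $\theta_s(0)=0$, $\theta_s(c_{max})=1$, and $C^\infty$ on $[c_{max},0)$ with $\theta_s'(c)<0$ there. Define $S(c):=\eta\,\frac{Q_p}{Q_p+Q_g}\,c$. For $c\in[c_{max},0]$, problem (P$_c$) asks for $\theta:\mathbb R\to[0,1]$, continuous, of class $C^2$ on $(-\infty,0]$ and on $[0,\infty)$ (one-sided derivatives at $0$), such that $\theta''+c\theta'=0$ for $x<0$; $\theta''+\eta c\theta'=-\Psi(\theta)$ for $x>0$; $\theta(x)\to0$ as $x\to-\infty$, $\theta(0)=\theta_s(c)$, $\theta(x)\to1$ as $x\to+\infty$, $\theta'(x)\to0$ as $x\to\pm\infty$; and the interface heat balance $\theta'(0^+)-\eta\,\theta'(0^-)=S(c)$.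 *)

From Stdlib Require Import Reals.
From Coquelicot Require Import Coquelicot.
Open Scope R_scope.

Definition smooth (f : R -> R) : Prop :=
  forall (n : nat) (x : R), ex_derive_n f n x.

Definition smooth_neg (f : R -> R) : Prop :=
  forall (n : nat) (x : R), x < 0 -> ex_derive_n f n x.

Definition C2 (f : R -> R) : Prop :=
  forall x : R, ex_derive f x /\ ex_derive (Derive f) x /\
                continuous (Derive (Derive f)) x.

Definition continuous_on_closed (f : R -> R) (a b : R) : Prop :=
  forall x, a <= x <= b -> forall eps : R, 0 < eps ->
    exists delta : R, 0 < delta /\
      forall y, a <= y <= b -> Rabs (y - x) < delta -> Rabs (f y - f x) < eps.

Definition strictly_decreasing_on (f : R -> R) (a b : R) : Prop :=
  forall x y, a <= x <= b -> a <= y <= b -> x < y -> f y < f x.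

Definition S_heat (eta Qg Qp c : R) : R := eta * (Qp / (Qp + Qg)) * c.

(* A function that is C^2 on (-oo,0] (resp. [0,+oo)) with
   one-sided derivatives at 0 is represented as the restriction of a C^2
   function thm (resp. thp) on R; theta'(0^-) = Derive thm 0,
   theta'(0^+) = Derive thp 0. *)
Definition Pc_solution (eta Qg Qp : R) (Psi : R -> R) (theta_s : R -> R)
    (c : R) (theta : R -> R) : Prop :=
  (forall x, 0 <= theta x <= 1) /\
  (forall x, continuous theta x) /\
  exists thm thp : R -> R,
    C2 thm /\ C2 thp /\
    (forall x, x <= 0 -> thm x = theta x) /\
    (forall x, 0 <= x -> thp x = theta x) /\
    (forall x, x < 0 -> Derive (Derive thm) x + c * Derive thm x = 0) /\
    (forall x, 0 < x ->
        Derive (Derive thp) x + eta * c * Derive thp x = - Psi (theta x)) /\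
    is_lim theta m_infty 0 /\
    theta 0 = theta_s c /\
    is_lim theta p_infty 1 /\
    is_lim (Derive thm) m_infty 0 /\
    is_lim (Derive thp) p_infty 0 /\
    Derive thp 0 - eta * Derive thm 0 = S_heat eta Qg Qp c.

Definition Pc_solvable (eta Qg Qp : R) (Psi theta_s : R -> R) (c : R) : Prop :=
  exists theta : R -> R, Pc_solution eta Qg Qp Psi theta_s c theta.

From Stdlib Require Import Reals Lra Lia FunctionalExtensionality ClassicalEpsilon Ranalysis5 Factorial.
From Coquelicot Require Import Coquelicot.
Open Scope R_scope.

(* On the solid side the profile is forced, theta = theta_s(c) e^(-c x), so the
   interface condition becomes a boundary condition for the gas phase: with a = - eta c and
   r = - Qp / (Qp + Qg) > 0 one needs a solution of f' = p, p' = a p - Psi(f) on [0, oo) with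
   f(0) = theta_s(c), p(0) = a (theta_s(c) + r) that tends to the equilibrium (1, 0).

   Existence is a shooting argument in c.  For c = c_max the temperature overshoots 1 while
   p > 0; for c = 0 the flux p turns negative while f < 1.  Both behaviours persist under small
   changes of c (continuous dependence, via Gronwall), so some c in (c_max, 0) shows neither; its
   trajectory stays in {p > 0, f < 1} and is forced to converge to (1, 0).  Global solutions of
   the gas equation come from Picard iteration, after clamping Psi to a globally Lipschitz rate.

   Uniqueness: if c1 < c2 both work, the front with c1 is faster (a1 > a2) and starts hotter
   (theta_s is decreasing).  Writing the slower front in the phase plane as p = Phi2(f), the
   difference p1 - Phi2(f1) is positive at 0 and increases while positive, which contradicts
   p1 -> 0. *)


(** * Elementary real analysis *)

Ltac rewrite_Derive f x df Hf :=
  let E := fresh in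
  assert (E : Derive (fun y => f y) x = df) by (apply is_derive_unique; exact Hf);
  rewrite E; clear E.

Lemma is_derive_continuity_pt (g : R -> R) x l : is_derive g x l -> continuity_pt g x.
Proof.
  intros Hg. apply continuity_pt_filterlim, (ex_derive_continuous g). now exists l.
Qed.

Lemma is_derive_minus_const (g : R -> R) k x l : is_derive g x l ->
  is_derive (fun y => g y - k) x l.
Proof. intros Hg. auto_derive; [now exists l|]. rewrite_Derive g x l Hg. ring. Qed.

Lemma mvt_interior (g dg : R -> R) u v : u < v ->
  (forall x, u <= x <= v -> is_derive g x (dg x)) ->
  exists c, u < c < v /\ g v - g u = dg c * (v - u).
Proof.
  intros Huv Hd.
  destruct (MVT_cor2 g dg u v Huv) as [c [E Hc]].
  - intros x Hx. apply is_derive_Reals, Hd. lra.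
  - now exists c.
Qed.

Lemma le_of_deriv_nonneg (g dg : R -> R) u v : u <= v ->
  (forall x, u <= x <= v -> is_derive g x (dg x)) ->
  (forall x, u < x < v -> 0 <= dg x) -> g u <= g v.
Proof.
  intros Huv Hd Hs. destruct (Req_dec u v) as [->|Hne]; [lra|].
  destruct (mvt_interior g dg u v) as [c [Hc E]]; [lra|exact Hd|].
  specialize (Hs c Hc). nra.
Qed.

Lemma lt_of_deriv_pos (g dg : R -> R) u v : u < v ->
  (forall x, u <= x <= v -> is_derive g x (dg x)) ->
  (forall x, u < x < v -> 0 < dg x) -> g u < g v.
Proof.
  intros Huv Hd Hs. destruct (mvt_interior g dg u v) as [c [Hc E]]; [lra|exact Hd|].
  specialize (Hs c Hc). nra.
Qed.

Lemma ge_of_deriv_nonpos (g dg : R -> R) u v : u <= v ->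
  (forall x, u <= x <= v -> is_derive g x (dg x)) ->
  (forall x, u < x < v -> dg x <= 0) -> g v <= g u.
Proof.
  intros Huv Hd Hs.
  enough (- g u <= - g v) by lra.
  apply (le_of_deriv_nonneg (fun x => - g x) (fun x => - dg x)); [exact Huv| |].
  - intros x Hx. apply (is_derive_opp g), Hd. exact Hx.
  - intros x Hx. specialize (Hs x Hx). lra.
Qed.

Lemma gt_of_deriv_neg (g dg : R -> R) u v : u < v ->
  (forall x, u <= x <= v -> is_derive g x (dg x)) ->
  (forall x, u < x < v -> dg x < 0) -> g v < g u.
Proof.
  intros Huv Hd Hs.
  enough (- g u < - g v) by lra.
  apply (lt_of_deriv_pos (fun x => - g x) (fun x => - dg x)); [exact Huv| |].
  - intros x Hx. apply (is_derive_opp g), Hd. exact Hx.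
  - intros x Hx. specialize (Hs x Hx). lra.
Qed.

Lemma const_of_deriv_zero (g dg : R -> R) u v : u <= v ->
  (forall x, u <= x <= v -> is_derive g x (dg x)) ->
  (forall x, u < x < v -> dg x = 0) -> g u = g v.
Proof.
  intros Huv Hd Hz. apply Rle_antisym.
  - apply (le_of_deriv_nonneg g dg u v Huv Hd). intros x Hx. rewrite Hz by exact Hx. lra.
  - apply (ge_of_deriv_nonpos g dg u v Huv Hd). intros x Hx. rewrite Hz by exact Hx. lra.
Qed.

Lemma is_lim_p_infty_Finite (f : R -> R) (l : R) : is_lim f p_infty l <->
  forall eps, 0 < eps -> exists M, forall x, M < x -> Rabs (f x - l) < eps.
Proof.
  rewrite <- is_lim_spec. split.
  - intros H eps Heps. exact (H (mkposreal eps Heps)).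
  - intros H eps. exact (H eps (cond_pos eps)).
Qed.

Lemma is_lim_p_infty_arbitrarily_far (f : R -> R) (l : R) : is_lim f p_infty l ->
  forall eps, 0 < eps -> forall X, exists x, X < x /\ Rabs (f x - l) < eps.
Proof.
  intros H eps Heps X. destruct (proj1 (is_lim_p_infty_Finite f l) H eps Heps) as [M HM].
  exists (Rmax M X + 1). split; [|apply HM]; pose proof (Rmax_l M X); pose proof (Rmax_r M X); lra.
Qed.

Lemma is_lim_p_infty_restrict (f g : R -> R) (l : R) :
  (forall x, 0 <= x -> f x = g x) -> is_lim g p_infty l -> is_lim f p_infty l.
Proof.
  intros E. apply is_lim_ext_loc. exists 0. intros x Hx. symmetry. apply E. lra.
Qed.

Lemma is_lim_m_infty_restrict (f g : R -> R) (l : R) :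
  (forall x, x <= 0 -> f x = g x) -> is_lim g m_infty l -> is_lim f m_infty l.
Proof.
  intros E. apply is_lim_ext_loc. exists 0. intros x Hx. symmetry. apply E. lra.
Qed.

Lemma abs_lt_of_sum_sq_lt u v m : 0 < m -> u ^ 2 + v ^ 2 < m ^ 2 -> Rabs u < m /\ Rabs v < m.
Proof.
  intros Hm H. pose proof (pow2_ge_0 u). pose proof (pow2_ge_0 v).
  assert (Hsq : forall z, z ^ 2 < m ^ 2 -> Rabs z < m).
  { intros z Hz. apply Rnot_le_lt. intros Hle.
    assert (m ^ 2 <= Rabs z ^ 2) by (apply pow_incr; lra). rewrite pow2_abs in *. lra. }
  split; apply Hsq; lra.
Qed.

Lemma is_lim_exp_scal_m_infty k : 0 < k -> is_lim (fun x => exp (k * x)) m_infty 0.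
Proof.
  intros Hk. apply (is_lim_comp exp (fun x => k * x) m_infty 0 m_infty); [exact is_lim_exp_m| |].
  - assert (E : Rbar_mult k m_infty = m_infty).
    { simpl. destruct (Rle_dec 0 k) as [Hle|]; [|lra].
      destruct (Rle_lt_or_eq_dec 0 k Hle); [reflexivity|lra]. }
    pose proof (is_lim_scal_l (fun y => y) k m_infty m_infty (is_lim_id m_infty)) as H.
    rewrite E in H. exact H.
  - exists 0. intros x _. discriminate.
Qed.

Lemma eq_of_abs_lt_all a b : (forall eps, 0 < eps -> Rabs (a - b) < eps) -> a = b.
Proof.
  intros H. destruct (Req_dec a b) as [|Hne]; [assumption|].
  specialize (H (Rabs (a - b)) (Rabs_pos_lt _ (Rminus_eq_contra _ _ Hne))). lra.
Qed.

Lemma continuity_pt_locally (g : R -> R) x : continuity_pt g x ->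
  forall eps, 0 < eps -> exists d, 0 < d /\ forall y, Rabs (y - x) < d -> Rabs (g y - g x) < eps.
Proof.
  intros Hc eps Heps. destruct (Hc eps Heps) as [d [Hd Hd']]. exists d. split; [exact Hd|].
  intros y Hy. destruct (Req_dec y x) as [->|Hne].
  - rewrite Rminus_diag, Rabs_R0. exact Heps.
  - apply Hd'. repeat split; auto.
Qed.

Lemma continuity_pt_gt (g : R -> R) x v : continuity_pt g x -> v < g x ->
  exists d, 0 < d /\ forall y, Rabs (y - x) < d -> v < g y.
Proof.
  intros Hc Hv. destruct (continuity_pt_locally g x Hc (g x - v)) as [d [Hd Hd']]; [lra|].
  exists d. split; [exact Hd|]. intros y Hy. specialize (Hd' y Hy). apply Rabs_def2 in Hd'. lra.
Qed.

Lemma continuity_pt_lt (g : R -> R) x v : continuity_pt g x -> g x < v ->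
  exists d, 0 < d /\ forall y, Rabs (y - x) < d -> g y < v.
Proof.
  intros Hc Hv. destruct (continuity_pt_locally g x Hc (v - g x)) as [d [Hd Hd']]; [lra|].
  exists d. split; [exact Hd|]. intros y Hy. specialize (Hd' y Hy). apply Rabs_def2 in Hd'. lra.
Qed.

Lemma continuity_pt_le_of_left (g : R -> R) x d v : continuity_pt g x -> 0 < d ->
  (forall y, x - d < y < x -> v < g y) -> v <= g x.
Proof.
  intros Hc Hd H. apply Rnot_lt_le. intros Hlt.
  destruct (continuity_pt_lt g x v Hc Hlt) as [e [He He']].
  assert (v < g (x - Rmin e d / 2)) by (apply H; pose proof (Rmin_r e d);
    pose proof (Rmin_glb_lt e d 0 He Hd); lra).
  assert (g (x - Rmin e d / 2) < v); [|lra].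
  apply He'. pose proof (Rmin_l e d); pose proof (Rmin_glb_lt e d 0 He Hd).
  rewrite Rabs_left; lra.
Qed.

Lemma deriv_pos_right (g : R -> R) x l d : is_derive g x l -> 0 < l -> 0 < d ->
  exists y, x < y < x + d /\ g x < g y.
Proof.
  intros Hg Hl Hd. apply is_derive_Reals in Hg.
  destruct (Hg (l / 2)) as [e He]; [lra|].
  set (h := Rmin e d / 2).
  assert (Hh : 0 < h < e /\ h < d).
  { pose proof (Rmin_l e d); pose proof (Rmin_r e d).
    pose proof (Rmin_glb_lt e d 0 (cond_pos e) Hd). unfold h. lra. }
  exists (x + h). split; [lra|].
  assert (Hq : Rabs ((g (x + h) - g x) / h - l) < l / 2).
  { apply He; [lra|]. rewrite Rabs_right; lra. }
  apply Rabs_def2 in Hq.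
  assert (E : (g (x + h) - g x) / h * h = g (x + h) - g x) by (field; lra).
  nra.
Qed.

Lemma deriv_neg_right (g : R -> R) x l d : is_derive g x l -> l < 0 -> 0 < d ->
  exists y, x < y < x + d /\ g y < g x.
Proof.
  intros Hg Hl Hd.
  destruct (deriv_pos_right (fun y => - g y) x (- l) d) as [y [Hy Hlt]];
    [apply (is_derive_opp g), Hg|lra|exact Hd|].
  exists y. split; [exact Hy|lra].
Qed.

Lemma continuity_pt_eq_of_adherent (g h : R -> R) x :
  continuity_pt g x -> continuity_pt h x ->
  (forall d, 0 < d -> exists y, Rabs (y - x) < d /\ g y = h y) -> g x = h x.
Proof.
  intros Hg Hh Hadh. apply eq_of_abs_lt_all. intros eps Heps.
  destruct (continuity_pt_locally g x Hg (eps / 2)) as [d1 [Hd1 Hd1']]; [lra|].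
  destruct (continuity_pt_locally h x Hh (eps / 2)) as [d2 [Hd2 Hd2']]; [lra|].
  destruct (Hadh (Rmin d1 d2)) as [y [Hy Ey]]; [now apply Rmin_glb_lt|].
  pose proof (Rmin_l d1 d2); pose proof (Rmin_r d1 d2).
  specialize (Hd1' y ltac:(lra)). specialize (Hd2' y ltac:(lra)). rewrite Ey in Hd1'.
  replace (g x - h x) with ((h y - h x) - (h y - g x)) by ring.
  eapply Rle_lt_trans; [apply Rabs_triang|]. rewrite Rabs_Ropp. lra.
Qed.

Lemma maximal_run (Q : R -> Prop) u v : u <= v -> Q u ->
  exists s, u <= s <= v /\ (forall y, u <= y < s -> Q y) /\
    forall t, s < t <= v -> exists y, s <= y <= t /\ ~ Q y.
Proof.
  intros Huv HQu.
  set (E := fun x => u <= x <= v /\ forall y, u <= y <= x -> Q y).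
  assert (HEu : E u) by (split; [lra|]; intros y Hy; now replace y with u by lra).
  destruct (completeness E) as [s [Hub Hlub]].
  { exists v. now intros x [Hx _]. }
  { now exists u. }
  assert (Hus : u <= s) by now apply Hub.
  assert (Hsv : s <= v) by (apply Hlub; now intros x [Hx _]).
  assert (Hbelow : forall y, u <= y < s -> Q y).
  { intros y Hy. apply NNPP. intros HnQ.
    enough (s <= y) by lra.
    apply Hlub. intros x [Hx HQ]. apply Rnot_lt_le. intros Hyx. apply HnQ, HQ. lra. }
  exists s. split; [lra|]. split; [exact Hbelow|].
  intros t Ht. apply NNPP. intros Hno.
  enough (E t) by (specialize (Hub t H); lra).
  split; [lra|]. intros y Hy. destruct (Rlt_dec y s) as [Hys|Hys]; [apply Hbelow; lra|].
  apply NNPP. intros HnQ. apply Hno. exists y. split; [lra|exact HnQ].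
Qed.

Lemma first_exit (Q : R -> Prop) u x1 : u <= x1 -> Q u -> ~ Q x1 ->
  (forall x, u <= x -> Q x -> exists d, 0 < d /\ forall y, x <= y < x + d -> Q y) ->
  exists x0, u < x0 <= x1 /\ (forall y, u <= y < x0 -> Q y) /\ ~ Q x0.
Proof.
  intros Hux HQu HnQ1 Hopen.
  destruct (maximal_run Q u x1 Hux HQu) as [s [Hs [Hbelow Hmax]]].
  assert (HnQs : ~ Q s).
  { intros HQs. destruct (Req_dec s x1) as [->|Hne]; [contradiction|].
    destruct (Hopen s ltac:(lra) HQs) as [d [Hd Hd']].
    destruct (Hmax (Rmin (s + d / 2) x1)) as [y [Hy HnQy]].
    { split; [apply Rmin_glb_lt|apply Rmin_r]; lra. }
    apply HnQy, Hd'. pose proof (Rmin_l (s + d / 2) x1). lra. }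
  exists s. split; [|split; [exact Hbelow|exact HnQs]].
  split; [|lra]. destruct (Req_dec s u) as [->|]; [contradiction|lra].
Qed.

Lemma connected_interval_gap (A B : R -> Prop) u v : u < v -> B u -> A v ->
  (forall c, u <= c <= v -> A c -> exists d, 0 < d /\
     forall c', u <= c' <= v -> Rabs (c' - c) < d -> A c') ->
  (forall c, u <= c <= v -> B c -> exists d, 0 < d /\
     forall c', u <= c' <= v -> Rabs (c' - c) < d -> B c') ->
  (forall c, u <= c <= v -> A c -> B c -> False) ->
  exists c, u <= c <= v /\ ~ A c /\ ~ B c.
Proof.
  intros Huv HBu HAv HAopen HBopen Hdisj.
  destruct (maximal_run B u v ltac:(lra) HBu) as [s [Hs [Hbelow Hmax]]].
  exists s. split; [exact Hs|split].
  - intros HAs. destruct (Req_dec s u) as [->|Hne]; [now apply (Hdisj u); [lra| |]|].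
    destruct (HAopen s Hs HAs) as [d [Hd Hd']].
    pose proof (Rmax_l u (s - d / 2)); pose proof (Rmax_r u (s - d / 2)).
    set (y := Rmax u (s - d / 2)) in *.
    assert (Hys : y < s) by (apply Rmax_lub_lt; lra).
    apply (Hdisj y); [lra| |apply Hbelow; lra].
    apply Hd'; [lra|]. rewrite Rabs_left; lra.
  - intros HBs. destruct (Req_dec s v) as [->|Hne]; [now apply (Hdisj v); [lra| |]|].
    destruct (HBopen s Hs HBs) as [d [Hd Hd']].
    destruct (Hmax (Rmin (s + d / 2) v)) as [y [Hy HnBy]].
    { split; [apply Rmin_glb_lt|apply Rmin_r]; lra. }
    pose proof (Rmin_l (s + d / 2) v); pose proof (Rmin_r (s + d / 2) v).
    apply HnBy, Hd'; [lra|]. rewrite Rabs_right; lra.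
Qed.

(* [W] increases while positive, so it has no first zero. *)
Lemma stays_above_start (W dW : R -> R) :
  (forall x, 0 <= x -> is_derive W x (dW x)) ->
  (forall x, 0 <= x -> 0 < W x -> 0 < dW x) -> 0 < W 0 ->
  forall x, 0 <= x -> W 0 <= W x.
Proof.
  intros Hd Hpos HW0.
  assert (Hincr : forall x, 0 < x -> (forall y, 0 <= y < x -> 0 < W y) -> W 0 < W x).
  { intros x Hx HW. apply (lt_of_deriv_pos W dW); [exact Hx| |].
    - intros y Hy. apply Hd. lra.
    - intros y Hy. apply Hpos, HW; lra. }
  assert (HWpos : forall x, 0 <= x -> 0 < W x).
  { intros x1 Hx1. apply NNPP. intros HnW.
    destruct (first_exit (fun y => 0 < W y) 0 x1) as [x0 [Hx0 [Hbelow HnW0]]]; auto.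
    - intros x Hx HWx.
      destruct (continuity_pt_gt W x 0 (is_derive_continuity_pt _ _ _ (Hd x Hx)) HWx) as [d [Hd0 Hd']].
      exists d. split; [exact Hd0|]. intros y Hy. apply Hd'. rewrite Rabs_right; lra.
    - specialize (Hincr x0 ltac:(lra) Hbelow). lra. }
  intros x Hx. destruct (Req_dec x 0) as [->|Hne]; [lra|].
  left. apply Hincr; [lra|]. intros y Hy. apply HWpos. lra.
Qed.

Lemma continuous_glue_at_0 (g1 g2 : R -> R) : continuity g1 -> continuity g2 -> g1 0 = g2 0 ->
  forall x, continuous (fun y => if Rle_dec y 0 then g1 y else g2 y) x.
Proof.
  intros C1 C2 E x. apply continuity_pt_filterlim. intros eps Heps.
  destruct (continuity_pt_locally g1 x (C1 x) eps Heps) as [d1 [Hd1 Hd1']].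
  destruct (continuity_pt_locally g2 x (C2 x) eps Heps) as [d2 [Hd2 Hd2']].
  pose proof (Rmin_l d1 d2); pose proof (Rmin_r d1 d2).
  destruct (Rtotal_order x 0) as [Hx|[->|Hx]].
  - exists (Rmin d1 (- x)). split; [apply Rmin_glb_lt; lra|].
    intros y [_ Hy]. simpl in Hy. unfold R_dist in Hy.
    pose proof (Rmin_l d1 (- x)); pose proof (Rmin_r d1 (- x)). apply Rabs_def2 in Hy.
    destruct (Rle_dec y 0); [|lra]. destruct (Rle_dec x 0); [|lra].
    apply Hd1'. apply Rabs_def1; lra.
  - exists (Rmin d1 d2). split; [now apply Rmin_glb_lt|].
    intros y [_ Hy]. simpl in Hy. unfold R_dist in Hy. destruct (Rle_dec 0 0); [|lra].
    destruct (Rle_dec y 0); [apply Hd1'; lra|]. rewrite E. apply Hd2'. lra.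
  - exists (Rmin d2 x). split; [apply Rmin_glb_lt; lra|].
    intros y [_ Hy]. simpl in Hy. unfold R_dist in Hy.
    pose proof (Rmin_l d2 x); pose proof (Rmin_r d2 x). apply Rabs_def2 in Hy.
    destruct (Rle_dec y 0); [lra|]. destruct (Rle_dec x 0); [lra|].
    apply Hd2'. apply Rabs_def1; lra.
Qed.

Lemma is_derive_inverse (f p tau : R -> R) y1 y :
  (forall x, is_derive f x (p x)) -> (forall x, 0 <= x -> 0 < p x) ->
  (forall z, f 0 <= z < y1 -> 0 <= tau z /\ f (tau z) = z) -> f 0 < y < y1 ->
  is_derive tau y (1 / p (tau y)).
Proof.
  intros Hd Hp Ht Hy.
  assert (Hinc : forall u v, 0 <= u -> u < v -> f u < f v).
  { intros u v Hu Huv. apply (lt_of_deriv_pos f p u v Huv); [intros; apply Hd|].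
    intros x Hx. apply Hp. lra. }
  assert (Hmono : forall z1 z2, f 0 <= z1 <= z2 -> z2 < y1 -> tau z1 <= tau z2).
  { intros z1 z2 Hz1 Hz2. apply Rnot_lt_le. intros Hlt.
    destruct (Ht z1 ltac:(lra)) as [A1 B1]. destruct (Ht z2 ltac:(lra)) as [A2 B2].
    specialize (Hinc (tau z2) (tau z1) A2 Hlt). lra. }
  set (u := (y + y1) / 2).
  destruct (Ht u ltac:(unfold u; lra)) as [Hu1 Hu2].
  assert (Htu : 0 < tau u).
  { destruct (Req_dec (tau u) 0) as [E|]; [|lra]. rewrite E in Hu2. unfold u in Hu2. lra. }
  assert (Hct : continuity_pt tau y).
  { apply (continuity_pt_recip_interv f tau 0 (tau u) Htu).
    - intros x z Hx Hxz Hz. apply Hinc; lra.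
    - intros x Hx1 Hx2. rewrite Hu2 in Hx2. unfold comp, id. apply Ht. unfold u in *; lra.
    - intros x Hx1 Hx2. rewrite Hu2 in Hx2.
      split; [apply Ht; unfold u in *; lra|apply Hmono; unfold u in *; lra].
    - intros a _. exact (is_derive_continuity_pt _ _ _ (Hd a)).
    - rewrite Hu2. unfold u. lra. }
  assert (Prf : forall a, tau (f 0) <= a <= tau u -> derivable_pt f a).
  { intros a _. apply ex_derive_Reals_0. exists (p a). apply Hd. }
  assert (Prg : tau (f 0) <= tau y <= tau u) by (split; apply Hmono; unfold u in *; lra).
  assert (HD : derive_pt f (tau y) (Prf (tau y) Prg) = p (tau y)).
  { apply derive_pt_eq_0, is_derive_Reals, Hd. }
  assert (Hne : derive_pt f (tau y) (Prf (tau y) Prg) <> 0).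
  { rewrite HD. assert (0 < p (tau y)) by (apply Hp, Ht; lra). lra. }
  pose proof (derivable_pt_lim_recip_interv f tau (f 0) u y Prf Hct
    ltac:(unfold u; lra) ltac:(unfold u; lra) Prg
    ltac:(intros x0 Hx0; unfold comp, id; apply Ht; unfold u in *; lra) Hne) as Hrecip.
  rewrite HD in Hrecip. now apply is_derive_Reals.
Qed.

Lemma le_exp_growth_of_deriv a (q Q : R -> R) x0 y : x0 <= y ->
  (forall x, x0 <= x <= y -> is_derive q x (a * q x - Q x)) -> (forall x, x0 <= x <= y -> 0 <= Q x) ->
  q y <= exp (a * (y - x0)) * q x0.
Proof.
  intros Hy Hq HQ.
  assert (Hh : exp (- (a * y)) * q y <= exp (- (a * x0)) * q x0).
  { apply (ge_of_deriv_nonpos (fun z => exp (- (a * z)) * q z)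
      (fun z => - (exp (- (a * z)) * Q z)) x0 y Hy).
    - intros z Hz. specialize (Hq z Hz). auto_derive; [now exists (a * q z - Q z)|].
      rewrite_Derive q z (a * q z - Q z) Hq. ring.
    - intros z Hz. pose proof (exp_pos (- (a * z))). specialize (HQ z ltac:(lra)). nra. }
  apply Rmult_le_compat_l with (r := exp (a * y)) in Hh; [|left; apply exp_pos].
  rewrite <- !Rmult_assoc, <- !exp_plus in Hh.
  replace (a * y + - (a * y)) with 0 in Hh by ring.
  replace (a * y + - (a * x0)) with (a * (y - x0)) in Hh by ring.
  rewrite exp_0, Rmult_1_l in Hh. exact Hh.
Qed.

(** * Global solutions of a Lipschitz second-order system *)

Definition lipschitz2 (F : R -> R -> R) (K : R) : Prop :=
  forall u1 v1 u2 v2, Rabs (F u1 v1 - F u2 v2) <= K * (Rabs (u1 - u2) + Rabs (v1 - v2)).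

Lemma lipschitz2_nonneg F K : lipschitz2 F K -> 0 <= K.
Proof.
  intros HF. specialize (HF 1 0 0 0).
  rewrite Rminus_0_r, Rminus_diag, Rabs_R0, Rabs_R1, Rplus_0_r, Rmult_1_r in HF.
  pose proof (Rabs_pos (F 1 0 - F 0 0)). lra.
Qed.

Lemma continuity_lipschitz2 F K (f p : R -> R) : lipschitz2 F K ->
  continuity f -> continuity p -> continuity (fun s => F (f s) (p s)).
Proof.
  intros HF Cf Cp x eps Heps. pose proof (lipschitz2_nonneg F K HF) as HK.
  set (e := eps / (2 * K + 2)).
  assert (He : 0 < e) by (apply Rdiv_lt_0_compat; lra).
  destruct (continuity_pt_locally f x (Cf x) e He) as [d1 [Hd1 Hd1']].
  destruct (continuity_pt_locally p x (Cp x) e He) as [d2 [Hd2 Hd2']].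
  exists (Rmin d1 d2). split; [now apply Rmin_glb_lt|].
  intros y [_ Hy]. simpl in Hy. unfold R_dist in Hy. simpl. unfold R_dist.
  pose proof (Rmin_l d1 d2); pose proof (Rmin_r d1 d2).
  specialize (Hd1' y ltac:(lra)). specialize (Hd2' y ltac:(lra)).
  eapply Rle_lt_trans; [apply HF|].
  apply Rle_lt_trans with (K * (2 * e)); [apply Rmult_le_compat_l; lra|].
  unfold e. apply Rmult_lt_reg_r with (2 * K + 2); [lra|]. field_simplify; nra.
Qed.

Lemma is_derive_primitive c (g : R -> R) x : continuity g ->
  is_derive (fun y => c + RInt g 0 y) x (g x).
Proof.
  intros Cg. rewrite <- (Rplus_0_l (g x)).
  apply is_derive_Reals, (derivable_pt_lim_plus (fun _ => c)); [apply derivable_pt_lim_const|].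
  apply is_derive_Reals, (is_derive_RInt g _ 0); [|now apply continuity_pt_filterlim].
  apply filter_forall. intros b. apply (RInt_correct (V := R_CompleteNormedModule)).
  apply (ex_RInt_continuous (V := R_CompleteNormedModule)).
  intros z _. now apply continuity_pt_filterlim.
Qed.

Lemma abs_le_pow_of_deriv (G g : R -> R) B m : G 0 = 0 ->
  (forall s, is_derive G s (g s)) -> (forall s, Rabs (g s) <= B * Rabs s ^ m) ->
  forall x, Rabs (G x) <= B * Rabs x ^ S m / INR (S m).
Proof.
  intros HG0 Hd Hg x. pose proof (lt_0_INR (S m) (Nat.lt_0_succ m)) as Hm.
  destruct (Rle_dec 0 x) as [Hx|Hx].
  - set (h := fun s => B * s ^ S m / INR (S m)).
    assert (Hh : forall s, is_derive h s (B * s ^ m)).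
    { intros s. unfold h. auto_derive; [exact I|].
      change (match m with 0%nat => 1 | S _ => INR m + 1 end) with (INR (S m)). field. lra. }
    assert (Hbound : forall s, 0 < s < x -> Rabs (g s) <= B * s ^ m).
    { intros s Hs. rewrite <- (Rabs_right s) at 2 by lra. apply Hg. }
    assert (H1 : h 0 - G 0 <= h x - G x).
    { apply (le_of_deriv_nonneg (fun s => h s - G s) (fun s => B * s ^ m - g s)); [exact Hx| |].
      - intros s _. now apply (is_derive_minus h G).
      - intros s Hs. specialize (Hbound s Hs). apply Rabs_le_between in Hbound. lra. }
    assert (H2 : h 0 + G 0 <= h x + G x).
    { apply (le_of_deriv_nonneg (fun s => h s + G s) (fun s => B * s ^ m + g s)); [exact Hx| |].
      - intros s _. now apply (is_derive_plus h G).
      - intros s Hs. specialize (Hbound s Hs). apply Rabs_le_between in Hbound. lra. }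
    unfold h in H1, H2. rewrite HG0, pow_i, Rmult_0_r in H1, H2 by lia.
    rewrite (Rabs_right x) by lra. apply Rabs_le. unfold Rdiv in *. lra.
  - set (h := fun s => - B * (- s) ^ S m / INR (S m)).
    assert (Hh : forall s, is_derive h s (B * (- s) ^ m)).
    { intros s. unfold h. auto_derive; [exact I|].
      change (match m with 0%nat => 1 | S _ => INR m + 1 end) with (INR (S m)). field. lra. }
    assert (Hbound : forall s, x < s < 0 -> Rabs (g s) <= B * (- s) ^ m).
    { intros s Hs. rewrite <- (Rabs_left s) by lra. apply Hg. }
    assert (H1 : h x - G x <= h 0 - G 0).
    { apply (le_of_deriv_nonneg (fun s => h s - G s) (fun s => B * (- s) ^ m - g s)); [lra| |].
      - intros s _. now apply (is_derive_minus h G).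
      - intros s Hs. specialize (Hbound s Hs). apply Rabs_le_between in Hbound. lra. }
    assert (H2 : h x + G x <= h 0 + G 0).
    { apply (le_of_deriv_nonneg (fun s => h s + G s) (fun s => B * (- s) ^ m + g s)); [lra| |].
      - intros s _. now apply (is_derive_plus h G).
      - intros s Hs. specialize (Hbound s Hs). apply Rabs_le_between in Hbound. lra. }
    unfold h in H1, H2. rewrite HG0, Ropp_0, pow_i, Rmult_0_r in H1, H2 by lia.
    rewrite (Rabs_left x) by lra. apply Rabs_le. unfold Rdiv in *. lra.
Qed.

Section Picard.

Variables (F : R -> R -> R) (K y0 v0 : R).
Hypothesis F_lip : lipschitz2 F K.

Fixpoint picard (n : nat) : (R -> R) * (R -> R) :=
  match n with
  | O => (fun _ => y0, fun _ => v0)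
  | S n => (fun x => y0 + RInt (snd (picard n)) 0 x,
            fun x => v0 + RInt (fun s => F (fst (picard n) s) (snd (picard n) s)) 0 x)
  end.

Lemma picard_continuity n : continuity (fst (picard n)) /\ continuity (snd (picard n)).
Proof.
  induction n as [|n [Cf Cp]]; simpl.
  - split; intros x; apply continuity_pt_const; now intros a b.
  - split; intros x.
    + exact (is_derive_continuity_pt _ _ _ (is_derive_primitive y0 _ x Cp)).
    + exact (is_derive_continuity_pt _ _ _
        (is_derive_primitive v0 _ x (continuity_lipschitz2 F K _ _ F_lip Cf Cp))).
Qed.

Lemma is_derive_picard n x :
  is_derive (fst (picard (S n))) x (snd (picard n) x) /\
  is_derive (snd (picard (S n))) x (F (fst (picard n) x) (snd (picard n) x)).
Proof.
  destruct (picard_continuity n) as [Cf Cp]. split.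
  - exact (is_derive_primitive y0 _ x Cp).
  - exact (is_derive_primitive v0 (fun s => F (fst (picard n) s) (snd (picard n) s)) x
      (continuity_lipschitz2 F K _ _ F_lip Cf Cp)).
Qed.

Lemma picard_at_0 n : fst (picard n) 0 = y0 /\ snd (picard n) 0 = v0.
Proof.
  destruct n as [|n]; simpl; [easy|].
  rewrite !RInt_point. unfold zero; simpl. split; ring.
Qed.

Definition picard_step (n : nat) (x : R) : R :=
  Rabs (fst (picard (S n)) x - fst (picard n) x) + Rabs (snd (picard (S n)) x - snd (picard n) x).

Lemma picard_step_bound n x :
  picard_step n x <= (Rabs v0 + Rabs (F y0 v0)) * (1 + K) ^ n * Rabs x ^ S n / INR (fact (S n)).
Proof.
  pose proof (lipschitz2_nonneg F K F_lip) as HK.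
  revert x. induction n as [|n IH]; intros x.
  - unfold picard_step. simpl. rewrite !RInt_const. unfold scal; simpl. unfold mult; simpl.
    replace (y0 + (x - 0) * v0 - y0) with (x * v0) by ring.
    replace (v0 + (x - 0) * F y0 v0 - v0) with (x * F y0 v0) by ring.
    rewrite !Rabs_mult. right. field.
  - set (b := (Rabs v0 + Rabs (F y0 v0)) * (1 + K) ^ n / INR (fact (S n))).
    assert (Hb : forall s, picard_step n s <= b * Rabs s ^ S n).
    { intros s. eapply Rle_trans; [apply IH|]. right. unfold b. field.
      apply not_0_INR, fact_neq_0. }
    destruct (picard_at_0 (S n)) as [Ef1 Ep1]. destruct (picard_at_0 (S (S n))) as [Ef2 Ep2].
    assert (Hf := abs_le_pow_of_deriv (fun s => fst (picard (S (S n))) s - fst (picard (S n)) s)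
      (fun s => snd (picard (S n)) s - snd (picard n) s) b (S n)).
    assert (Hp := abs_le_pow_of_deriv (fun s => snd (picard (S (S n))) s - snd (picard (S n)) s)
      (fun s => F (fst (picard (S n)) s) (snd (picard (S n)) s) - F (fst (picard n) s) (snd (picard n) s))
      (K * b) (S n)).
    unfold picard_step. eapply Rle_trans; [apply Rplus_le_compat; [apply Hf|apply Hp]|].
    + cbv beta. rewrite Ef1, Ef2. ring.
    + intros s. apply (is_derive_minus (fst (picard (S (S n))))); apply is_derive_picard.
    + intros s. specialize (Hb s). unfold picard_step in Hb.
      pose proof (Rabs_pos (fst (picard (S n)) s - fst (picard n) s)). lra.
    + cbv beta. rewrite Ep1, Ep2. ring.
    + intros s. apply (is_derive_minus (snd (picard (S (S n))))); apply is_derive_picard.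
    + intros s. eapply Rle_trans; [apply F_lip|]. rewrite Rmult_assoc.
      apply Rmult_le_compat_l; [exact HK|apply Hb].
    + change (fact (S (S n))) with (S (S n) * fact (S n))%nat. rewrite mult_INR.
      unfold b. simpl pow. right. field.
      split; [apply not_0_INR, fact_neq_0|apply not_0_INR; lia].
Qed.

End Picard.

Lemma Un_cv_scal_0 (t : nat -> R) k : Un_cv t 0 -> Un_cv (fun n => k * t n) 0.
Proof.
  intros Ht eps Heps. pose proof (Rabs_pos k).
  destruct (Ht (eps / (Rabs k + 1))) as [N HN]; [apply Rdiv_lt_0_compat; lra|].
  exists N. intros n Hn. specialize (HN n Hn). unfold R_dist in *.
  rewrite Rminus_0_r in *. rewrite Rabs_mult.
  pose proof (Rabs_pos (t n)).
  apply Rle_lt_trans with ((Rabs k + 1) * Rabs (t n)); [nra|].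
  apply Rlt_le_trans with ((Rabs k + 1) * (eps / (Rabs k + 1))).
  - apply Rmult_lt_compat_l; lra.
  - right. field. lra.
Qed.

Lemma eq_of_tail_bound a b (t : nat -> R) : (forall n, Rabs (a - b) <= t n) -> Un_cv t 0 -> a = b.
Proof.
  intros Hb Ht. apply eq_of_abs_lt_all. intros eps Heps.
  destruct (Ht eps Heps) as [N HN]. specialize (HN N (le_n N)). specialize (Hb N).
  unfold R_dist in HN. rewrite Rminus_0_r in HN. apply Rabs_def2 in HN. lra.
Qed.

Lemma Un_cv_of_tail_bound (a : nat -> R) l (t : nat -> R) :
  (forall n, Rabs (l - a n) <= t n) -> Un_cv t 0 -> Un_cv a l.
Proof.
  intros Hb Ht eps Heps. destruct (Ht eps Heps) as [N HN]. exists N. intros n Hn.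
  specialize (HN n Hn). specialize (Hb n). unfold R_dist in *. rewrite Rminus_0_r in HN.
  rewrite Rabs_minus_sym. apply Rabs_def2 in HN. lra.
Qed.

Lemma CVU_of_tail_bound (u : nat -> R -> R) g c r (t : nat -> R) :
  (forall n y, Boule c r y -> Rabs (g y - u n y) <= t n) -> Un_cv t 0 -> CVU u g c r.
Proof.
  intros Hb Ht eps Heps. destruct (Ht eps Heps) as [N HN]. exists N. intros n y Hn Hy.
  specialize (HN n Hn). specialize (Hb n y Hy). unfold R_dist in HN. rewrite Rminus_0_r in HN.
  apply Rabs_def2 in HN. lra.
Qed.

Fixpoint partial_sum (w : nat -> R) (n : nat) : R :=
  match n with O => 0 | S n => partial_sum w n + w n end.

Lemma partial_sum_le w n m : (forall k, 0 <= w k) -> (n <= m)%nat ->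
  partial_sum w n <= partial_sum w m.
Proof. intros Hw Hnm. induction Hnm as [|m _ IH]; simpl; [lra|]. specialize (Hw m). lra. Qed.

Lemma partial_sum_le_lim w l n : (forall k, 0 <= w k) -> Un_cv (partial_sum w) l ->
  partial_sum w n <= l.
Proof.
  intros Hw Hl. apply Rnot_lt_le. intros Hlt.
  destruct (Hl (partial_sum w n - l)) as [N HN]; [lra|].
  specialize (HN (max N n) (Nat.le_max_l N n)). unfold R_dist in HN.
  pose proof (partial_sum_le w n (max N n) Hw (Nat.le_max_r N n)).
  apply Rabs_def2 in HN. lra.
Qed.

Lemma Un_cv_partial_sum_tail w l : Un_cv (partial_sum w) l ->
  Un_cv (fun n => l - partial_sum w n) 0.
Proof.
  intros Hl eps Heps. destruct (Hl eps Heps) as [N HN]. exists N. intros n Hn.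
  specialize (HN n Hn). unfold R_dist in *. rewrite Rminus_0_r, Rabs_minus_sym. exact HN.
Qed.

Lemma partial_sum_exp a z :
  Un_cv (partial_sum (fun k => a * (z ^ k / INR (fact k)))) (a * exp z).
Proof.
  assert (E : forall N, partial_sum (fun k => a * (z ^ k / INR (fact k))) (S N) = a * E1 z N).
  { intros N. unfold E1. induction N as [|N IH].
    - simpl. field.
    - change (partial_sum (fun k => a * (z ^ k / INR (fact k))) (S (S N)))
        with (partial_sum (fun k => a * (z ^ k / INR (fact k))) (S N)
              + a * (z ^ S N / INR (fact (S N)))).
      rewrite IH. cbn [sum_f_R0]. field. apply not_0_INR, fact_neq_0. }
  apply (CV_shift _ 1). apply (Un_cv_ext (fun n => a * E1 z n)).
  - intros n. rewrite Nat.add_1_r. symmetry. apply E.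
  - apply (CV_mult (fun _ => a)); [|apply E1_cvg].
    intros eps Heps. exists 0%nat. intros. unfold R_dist. rewrite Rminus_diag, Rabs_R0. exact Heps.
Qed.

Lemma uniform_limit_of_summable_increments (u : nat -> R -> R) (w : R -> nat -> R) (l : R -> R) :
  (forall T k, 0 <= T -> 0 <= w T k) -> (forall T, 0 <= T -> Un_cv (partial_sum (w T)) (l T)) ->
  (forall T n x, Rabs x <= T -> Rabs (u (S n) x - u n x) <= w T n) ->
  exists g : R -> R, forall T n x, Rabs x <= T ->
    Rabs (g x - u n x) <= l T - partial_sum (w T) n.
Proof.
  intros Hw Hl Hinc.
  assert (Htele : forall T x n m, Rabs x <= T -> (n <= m)%nat ->
            Rabs (u m x - u n x) <= partial_sum (w T) m - partial_sum (w T) n).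
  { intros T x n m Hx Hnm. induction Hnm as [|m _ IH].
    - rewrite !Rminus_diag, Rabs_R0. lra.
    - simpl. specialize (Hinc T m x Hx).
      replace (u (S m) x - u n x) with ((u (S m) x - u m x) + (u m x - u n x)) by ring.
      eapply Rle_trans; [apply Rabs_triang|]. lra. }
  assert (Hcauchy : forall x, Cauchy_crit (fun n => u n x)).
  { intros x eps Heps. pose proof (Rabs_pos x) as HT.
    destruct (Un_cv_partial_sum_tail _ _ (Hl _ HT) eps Heps) as [N HN]. exists N.
    intros n m Hn Hm. unfold R_dist in *.
    assert (Hsum : forall k, (N <= k)%nat -> l (Rabs x) - partial_sum (w (Rabs x)) k < eps).
    { intros k Hk. specialize (HN k Hk). rewrite Rminus_0_r in HN. apply Rabs_def2 in HN. lra. }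
    pose proof (partial_sum_le_lim _ _ n (fun k => Hw _ k HT) (Hl _ HT)).
    pose proof (partial_sum_le_lim _ _ m (fun k => Hw _ k HT) (Hl _ HT)).
    destruct (Nat.le_ge_cases n m) as [Hnm|Hnm].
    - rewrite Rabs_minus_sym. specialize (Htele _ x n m (Rle_refl _) Hnm). specialize (Hsum n Hn). lra.
    - specialize (Htele _ x m n (Rle_refl _) Hnm). specialize (Hsum m Hm). lra. }
  exists (fun x => proj1_sig (Rcomplete.R_complete _ (Hcauchy x))).
  intros T n x Hx. destruct (Rcomplete.R_complete _ (Hcauchy x)) as [g Hg]; simpl.
  assert (HT : 0 <= T) by (pose proof (Rabs_pos x); lra).
  apply Rle_plus_epsilon. intros eps Heps.
  destruct (Hg eps Heps) as [N HN]. specialize (HN (max N n) (Nat.le_max_l N n)).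
  unfold R_dist in HN.
  pose proof (Htele T x n (max N n) Hx (Nat.le_max_r N n)).
  pose proof (partial_sum_le_lim _ _ (max N n) (fun k => Hw _ k HT) (Hl _ HT)).
  replace (g - u n x) with (- (u (max N n) x - g) + (u (max N n) x - u n x)) by ring.
  eapply Rle_trans; [apply Rabs_triang|]. rewrite Rabs_Ropp. lra.
Qed.

Lemma picard_weight_le M C T x n : 0 <= M -> 0 <= C -> Rabs x <= T ->
  M * C ^ n * Rabs x ^ S n / INR (fact (S n)) <= M * T * ((C * T) ^ n / INR (fact n)).
Proof.
  intros HM HC Hx. pose proof (Rabs_pos x) as Hx0.
  pose proof (lt_0_INR _ (lt_O_fact n)) as Hfact.
  assert (HS : 1 <= INR (S n)) by (rewrite S_INR; pose proof (pos_INR n); lra).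
  assert (Hpow : Rabs x ^ S n <= T ^ S n) by (apply pow_incr; lra).
  change (fact (S n)) with (S n * fact n)%nat. rewrite mult_INR.
  pose proof (pow_le C n HC) as HCn.
  apply Rle_trans with (M * C ^ n * T ^ S n * / INR (fact n)).
  - apply Rmult_le_compat.
    + apply Rmult_le_pos; [now apply Rmult_le_pos|apply pow_le; lra].
    + left. apply Rinv_0_lt_compat. nra.
    + apply Rmult_le_compat_l; [now apply Rmult_le_pos|exact Hpow].
    + apply Rinv_le_contravar; nra.
  - right. rewrite Rpow_mult_distr. simpl. field. lra.
Qed.

Lemma picard_locally_uniform_limit F K y0 v0 : lipschitz2 F K ->
  exists (f p : R -> R) (tail : R -> nat -> R),
    (forall T, 0 <= T -> Un_cv (tail T) 0) /\ (forall T n, 0 <= T -> tail T (S n) <= tail T n) /\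
    forall T n x, Rabs x <= T ->
      Rabs (f x - fst (picard F y0 v0 n) x) <= tail T n /\
      Rabs (p x - snd (picard F y0 v0 n) x) <= tail T n.
Proof.
  intros HF. pose proof (lipschitz2_nonneg F K HF) as HK.
  set (M := Rabs v0 + Rabs (F y0 v0)).
  assert (HM : 0 <= M) by (pose proof (Rabs_pos v0); pose proof (Rabs_pos (F y0 v0)); unfold M; lra).
  set (w := fun T k => M * T * (((1 + K) * T) ^ k / INR (fact k))).
  set (l := fun T => M * T * exp ((1 + K) * T)).
  assert (Hw : forall T k, 0 <= T -> 0 <= w T k).
  { intros T k HT. unfold w. apply Rmult_le_pos; [now apply Rmult_le_pos|].
    apply Rmult_le_pos; [apply pow_le; nra|left; apply Rinv_0_lt_compat, lt_0_INR, lt_O_fact]. }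
  assert (Hl : forall T, 0 <= T -> Un_cv (partial_sum (w T)) (l T))
    by (intros T _; apply partial_sum_exp).
  assert (Hstep : forall T n x, Rabs x <= T -> picard_step F y0 v0 n x <= w T n).
  { intros T n x Hx. eapply Rle_trans; [exact (picard_step_bound F K y0 v0 HF n x)|].
    apply picard_weight_le; lra. }
  destruct (uniform_limit_of_summable_increments (fun n => fst (picard F y0 v0 n)) w l Hw Hl)
    as [f Hf].
  { intros T n x Hx. specialize (Hstep T n x Hx). unfold picard_step in Hstep.
    pose proof (Rabs_pos (snd (picard F y0 v0 (S n)) x - snd (picard F y0 v0 n) x)). lra. }
  destruct (uniform_limit_of_summable_increments (fun n => snd (picard F y0 v0 n)) w l Hw Hl)
    as [p Hp].
  { intros T n x Hx. specialize (Hstep T n x Hx). unfold picard_step in Hstep.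
    pose proof (Rabs_pos (fst (picard F y0 v0 (S n)) x - fst (picard F y0 v0 n) x)). lra. }
  exists f, p, (fun T n => l T - partial_sum (w T) n). split; [|split].
  - intros T HT. exact (Un_cv_partial_sum_tail _ _ (Hl T HT)).
  - intros T n HT. simpl. specialize (Hw T n HT). lra.
  - intros T n x Hx. split; [apply Hf|apply Hp]; exact Hx.
Qed.

(* The derivatives of the iterates converge locally uniformly too, so [CVU_derivable]
   identifies the derivatives of the limit without passing to the limit in the integrals. *)
Theorem lipschitz2_global_solution F K y0 v0 : lipschitz2 F K ->
  exists f p : R -> R, (forall x, is_derive f x (p x)) /\
    (forall x, is_derive p x (F (f x) (p x))) /\ f 0 = y0 /\ p 0 = v0.
Proof.
  intros HF. pose proof (lipschitz2_nonneg F K HF) as HK.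
  destruct (picard_locally_uniform_limit F K y0 v0 HF) as [f [p [tail [Htail [Htail_S Hb]]]]].
  exists f, p.
  assert (Hderiv : forall x, is_derive f x (p x) /\ is_derive p x (F (f x) (p x))).
  { intros x. set (T := Rabs x + 1).
    assert (HT : 0 < T) by (pose proof (Rabs_pos x); unfold T; lra).
    set (r := mkposreal T HT).
    assert (HB : forall y, Boule 0 r y -> Rabs y <= T).
    { intros y Hy. unfold Boule in Hy. simpl in Hy. rewrite Rminus_0_r in Hy. lra. }
    assert (Hx : Boule 0 r x) by (unfold Boule; simpl; rewrite Rminus_0_r; unfold T; lra).
    split; apply is_derive_Reals.
    - apply (CVU_derivable (fun n => fst (picard F y0 v0 (S n))) (fun n => snd (picard F y0 v0 n))
        f p 0 r); [| |intros n y _; apply is_derive_Reals;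
        exact (proj1 (is_derive_picard F K y0 v0 HF n y))|exact Hx].
      + apply (CVU_of_tail_bound _ _ _ _ (tail T)); [|apply Htail; lra].
        intros n y Hy. apply Hb, HB, Hy.
      + intros y Hy. apply (Un_cv_of_tail_bound _ _ (tail T)); [|apply Htail; lra].
        intros n. eapply Rle_trans; [apply Hb, HB, Hy|apply Htail_S; lra].
    - apply (CVU_derivable (fun n => snd (picard F y0 v0 (S n)))
        (fun n y => F (fst (picard F y0 v0 n) y) (snd (picard F y0 v0 n) y))
        p (fun y => F (f y) (p y)) 0 r); [| |intros n y _; apply is_derive_Reals;
        exact (proj2 (is_derive_picard F K y0 v0 HF n y))|exact Hx].
      + apply (CVU_of_tail_bound _ _ _ _ (fun n => K * (2 * tail T n))).
        * intros n y Hy. eapply Rle_trans; [apply HF|]. apply Rmult_le_compat_l; [exact HK|].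
          destruct (Hb T n y (HB y Hy)). lra.
        * apply Un_cv_scal_0, Un_cv_scal_0, Htail. lra.
      + intros y Hy. apply (Un_cv_of_tail_bound _ _ (tail T)); [|apply Htail; lra].
        intros n. eapply Rle_trans; [apply Hb, HB, Hy|apply Htail_S; lra]. }
  split; [intros x; apply Hderiv|]. split; [intros x; apply Hderiv|].
  assert (H0 : Rabs 0 <= 1) by (rewrite Rabs_R0; lra).
  split; apply (eq_of_tail_bound _ _ (tail 1)); try (apply Htail; lra); intros n.
  - rewrite <- (proj1 (picard_at_0 F y0 v0 n)). exact (proj1 (Hb 1 n 0 H0)).
  - rewrite <- (proj2 (picard_at_0 F y0 v0 n)). exact (proj2 (Hb 1 n 0 H0)).
Qed.


(** * Reaction rate and solid phase *)

Definition clamp01 (u : R) : R := Rmax 0 (Rmin u 1).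

Lemma clamp01_range u : 0 <= clamp01 u <= 1.
Proof. unfold clamp01, Rmax, Rmin. repeat destruct Rle_dec; lra. Qed.

Lemma clamp01_id u : 0 <= u <= 1 -> clamp01 u = u.
Proof. intros. unfold clamp01, Rmax, Rmin. repeat destruct Rle_dec; lra. Qed.

Lemma clamp01_lt_1 u : u < 1 -> clamp01 u < 1.
Proof. intros. unfold clamp01, Rmax, Rmin. repeat destruct Rle_dec; lra. Qed.

Lemma clamp01_lipschitz u v : Rabs (clamp01 u - clamp01 v) <= Rabs (u - v).
Proof.
  unfold clamp01, Rmax, Rmin. repeat destruct Rle_dec; unfold Rabs; repeat destruct Rcase_abs; lra.
Qed.

Lemma smooth_lipschitz_on_01 (g : R -> R) : smooth g -> exists L, 0 <= L /\
  forall u v, 0 <= u <= 1 -> 0 <= v <= 1 -> Rabs (g u - g v) <= L * Rabs (u - v).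
Proof.
  intros Hg.
  assert (Hd : forall x, is_derive g x (Derive g x)) by (intros x; apply Derive_correct, (Hg 1%nat)).
  assert (Cg : forall x, 0 <= x <= 1 -> continuity_pt (fun y => Rabs (Derive g y)) x).
  { intros x _. apply continuity_pt_filterlim.
    apply (continuous_comp (Derive g) Rabs); [|apply continuous_Rabs].
    apply (ex_derive_continuous (Derive g)). exact (Hg 2%nat x). }
  destruct (continuity_ab_maj _ 0 1 ltac:(lra) Cg) as [M [HM _]].
  exists (Rabs (Derive g M)). split; [apply Rabs_pos|]. intros u v Hu Hv.
  destruct (Rtotal_order u v) as [Hlt|[->|Hgt]].
  - destruct (mvt_interior g (Derive g) u v Hlt) as [c [Hc E]]; [intros; apply Hd|].
    rewrite Rabs_minus_sym, E, Rabs_mult, (Rabs_minus_sym u v).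
    apply Rmult_le_compat_r; [apply Rabs_pos|apply HM; lra].
  - rewrite !Rminus_diag, Rabs_R0. lra.
  - destruct (mvt_interior g (Derive g) v u Hgt) as [c [Hc E]]; [intros; apply Hd|].
    rewrite E, Rabs_mult. apply Rmult_le_compat_r; [apply Rabs_pos|apply HM; lra].
Qed.

Lemma solid_flux_exponential c (g : R -> R) : C2 g ->
  (forall x, x < 0 -> Derive (Derive g) x + c * Derive g x = 0) ->
  forall x, x <= 0 -> Derive g x = Derive g 0 * exp (- c * x).
Proof.
  intros Hg Hode x Hx.
  assert (Hq : forall y, is_derive (Derive g) y (Derive (Derive g) y))
    by (intros y; apply Derive_correct, Hg).
  assert (E : exp (c * x) * Derive g x = exp (c * 0) * Derive g 0).
  { apply (const_of_deriv_zero (fun z => exp (c * z) * Derive g z)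
      (fun z => exp (c * z) * (c * Derive g z + Derive (Derive g) z)) x 0 Hx).
    - intros y _. auto_derive; [now exists (Derive (Derive g) y)|].
      rewrite_Derive (Derive g) y (Derive (Derive g) y) (Hq y). ring.
    - intros y Hy. rewrite Rplus_comm, Hode by lra. ring. }
  rewrite Rmult_0_r, exp_0, Rmult_1_l in E. rewrite <- E, (Rmult_comm (exp (c * x))), Rmult_assoc,
    <- exp_plus. replace (c * x + - c * x) with 0 by ring. rewrite exp_0. ring.
Qed.

Lemma Derive_exp_profile th c :
  Derive (fun x => th * exp (- c * x)) = fun x => - c * th * exp (- c * x).
Proof.
  apply functional_extensionality. intros x. apply is_derive_unique. auto_derive; [exact I|ring].
Qed.

Lemma exp_profile_C2 th c : C2 (fun x => th * exp (- c * x)).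
Proof.
  intros x. rewrite Derive_exp_profile, Derive_exp_profile. split; [|split].
  - auto_derive. exact I.
  - auto_derive. exact I.
  - apply (ex_derive_continuous (fun x => - c * (- c * th) * exp (- c * x))). auto_derive. exact I.
Qed.

Lemma is_lim_exp_profile th c : c < 0 -> is_lim (fun x => th * exp (- c * x)) m_infty 0.
Proof.
  intros Hc. replace (Finite 0) with (Rbar_mult th 0) by (simpl; f_equal; ring).
  apply (is_lim_scal_l _ th), is_lim_exp_scal_m_infty. lra.
Qed.

Lemma bounded_affine_slope_zero (g : R -> R) q : (forall x, x <= 0 -> g x = g 0 + q * x) ->
  (forall x, x <= 0 -> 0 <= g x <= 1) -> q = 0.
Proof.
  intros Hlin Hrange. pose proof (Hrange 0 (Rle_refl 0)).
  destruct (Rtotal_order q 0) as [Hneg|[Hz|Hpos]]; [exfalso|exact Hz|exfalso].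
  - pose proof (Rdiv_pos_neg 2 q ltac:(lra) Hneg) as Hx.
    specialize (Hlin (2 / q) ltac:(lra)). pose proof (Hrange (2 / q) ltac:(lra)).
    replace (q * (2 / q)) with 2 in Hlin by (field; lra). lra.
  - pose proof (Rdiv_neg_pos (-2) q ltac:(lra) Hpos) as Hx.
    specialize (Hlin (-2 / q) ltac:(lra)). pose proof (Hrange (-2 / q) ltac:(lra)).
    replace (q * (-2 / q)) with (-2) in Hlin by (field; lra). lra.
Qed.

Lemma solid_flux_at_interface c (g : R -> R) : c <= 0 -> C2 g ->
  (forall x, x < 0 -> Derive (Derive g) x + c * Derive g x = 0) ->
  (forall x, x <= 0 -> 0 <= g x <= 1) -> is_lim g m_infty 0 -> Derive g 0 = - c * g 0.
Proof.
  intros Hc Hg Hode Hrange Hlim.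
  pose proof (solid_flux_exponential c g Hg Hode) as Hq.
  assert (Hd : forall y, is_derive g y (Derive g y)) by (intros y; apply Derive_correct, Hg).
  set (q0 := Derive g 0) in *.
  destruct (Req_dec c 0) as [->|Hc0].
  - assert (Hlin : forall x, x <= 0 -> g x - q0 * x = g 0).
    { intros x Hx. replace (g 0) with (g 0 - q0 * 0) by ring.
      apply (const_of_deriv_zero (fun z => g z - q0 * z) (fun z => Derive g z - q0) x 0 Hx).
      - intros y _. auto_derive; [now exists (Derive g y)|].
        rewrite_Derive g y (Derive g y) (Hd y). ring.
      - intros y Hy. rewrite Hq by lra. replace (- 0 * y) with 0 by ring. rewrite exp_0. ring. }
    enough (q0 = 0) by (rewrite H; ring).
    apply (bounded_affine_slope_zero g q0); [|exact Hrange]. intros x Hx. rewrite <- (Hlin x Hx). ring.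
  - assert (Hconst : forall x, x <= 0 -> g x + q0 / c * exp (- c * x) = g 0 + q0 / c).
    { intros x Hx. replace (g 0 + q0 / c) with (g 0 + q0 / c * exp (- c * 0))
        by (rewrite Rmult_0_r, exp_0; ring).
      apply (const_of_deriv_zero (fun z => g z + q0 / c * exp (- c * z))
        (fun z => Derive g z - q0 * exp (- c * z)) x 0 Hx).
      - intros y _. auto_derive; [now exists (Derive g y)|].
        rewrite_Derive g y (Derive g y) (Hd y). field. lra.
      - intros y Hy. rewrite Hq by lra. ring. }
    assert (Hlim0 : is_lim (fun x => g x + q0 / c * exp (- c * x)) m_infty 0).
    { replace (Finite 0) with (Finite (0 + q0 / c * 0)) by (f_equal; ring).
      apply is_lim_plus'; [exact Hlim|].
      apply (is_lim_scal_l _ (q0 / c) m_infty 0). apply is_lim_exp_scal_m_infty. lra. }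
    assert (Hlim1 : is_lim (fun x => g x + q0 / c * exp (- c * x)) m_infty (g 0 + q0 / c)).
    { apply (is_lim_ext_loc (fun _ => g 0 + q0 / c)); [|apply is_lim_const].
      exists 0. intros x Hx. symmetry. apply Hconst. lra. }
    apply is_lim_unique in Hlim0. apply is_lim_unique in Hlim1. rewrite Hlim0 in Hlim1.
    injection Hlim1 as E. apply (Rmult_eq_reg_r (/ c)); [|now apply Rinv_neq_0_compat].
    replace (- c * g 0 * / c) with (- g 0) by (field; lra). unfold Rdiv in E. lra.
Qed.


(** * The gas-phase equation [f' = p], [p' = a p - P f] *)

Lemma two_abs_mul_le X Y : 2 * Rabs X * Rabs Y <= X ^ 2 + Y ^ 2.
Proof.
  pose proof (pow2_ge_0 (Rabs X - Rabs Y)).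
  rewrite <- (pow2_abs X), <- (pow2_abs Y). nra.
Qed.

Lemma distance_rate_nonpos L a a' U V Q w del : 0 <= L -> 0 <= a' ->
  Rabs Q <= L * Rabs U -> (a - a') ^ 2 * w ^ 2 <= del ->
  - (3 + 2 * a' + L) * (U ^ 2 + V ^ 2 + del) + 2 * U * V
    + 2 * V * (a' * V + (a - a') * w - Q) <= 0.
Proof.
  intros HL Ha' HQ Hdel.
  pose proof (two_abs_mul_le U V).
  assert (U * V <= Rabs U * Rabs V) by (rewrite <- Rabs_mult; apply Rle_abs).
  assert (- (V * Q) <= Rabs V * Rabs Q) by (rewrite <- Rabs_mult, <- Rabs_Ropp; apply Rle_abs).
  assert (Rabs V * Rabs Q <= L * (Rabs U * Rabs V)).
  { replace (L * (Rabs U * Rabs V)) with (Rabs V * (L * Rabs U)) by ring.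
    apply Rmult_le_compat_l; [apply Rabs_pos|exact HQ]. }
  assert (L * (2 * Rabs U * Rabs V) <= L * (U ^ 2 + V ^ 2)) by (apply Rmult_le_compat_l; lra).
  assert (2 * V * ((a - a') * w) <= V ^ 2 + (a - a') ^ 2 * w ^ 2)
    by (pose proof (pow2_ge_0 (V - (a - a') * w)); nra).
  assert (Hd0 : 0 <= del) by (pose proof (pow2_ge_0 (a - a')); pose proof (pow2_ge_0 w); nra).
  pose proof (pow2_ge_0 U). pose proof (pow2_ge_0 V).
  assert (a' * V ^ 2 <= a' * (U ^ 2 + V ^ 2 + del)) by (apply Rmult_le_compat_l; lra).
  assert (L * (U ^ 2 + V ^ 2) <= L * (U ^ 2 + V ^ 2 + del)) by (apply Rmult_le_compat_l; lra).
  replace (- (3 + 2 * a' + L) * (U ^ 2 + V ^ 2 + del) + 2 * U * V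
    + 2 * V * (a' * V + (a - a') * w - Q)) with
    (- 3 * (U ^ 2 + V ^ 2 + del) - 2 * (a' * (U ^ 2 + V ^ 2 + del))
     - L * (U ^ 2 + V ^ 2 + del) + 2 * (U * V) + 2 * (a' * V ^ 2)
     + 2 * V * ((a - a') * w) - 2 * (V * Q)) by ring.
  lra.
Qed.

Section GasEquation.

Variables (P : R -> R) (L : R).
Hypothesis P_nonneg : forall u, 0 <= P u.
Hypothesis P_pos : forall u, u < 1 -> 0 < P u.
Hypothesis P_1 : P 1 = 0.
Hypothesis P_lip : forall u v, Rabs (P u - P v) <= L * Rabs (u - v).

Lemma P_lip_nonneg : 0 <= L.
Proof.
  specialize (P_lip 1 0). rewrite Rminus_0_r, Rabs_R1, Rmult_1_r in P_lip.
  pose proof (Rabs_pos (P 1 - P 0)). lra.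
Qed.

Lemma P_continuity : continuity P.
Proof.
  intros x eps Heps. pose proof P_lip_nonneg as HL. exists (eps / (L + 1)).
  split; [apply Rdiv_lt_0_compat; lra|]. intros y [_ Hy]. simpl in *. unfold R_dist in *.
  eapply Rle_lt_trans; [apply P_lip|].
  apply Rle_lt_trans with ((L + 1) * Rabs (y - x)); [pose proof (Rabs_pos (y - x)); nra|].
  apply Rlt_le_trans with ((L + 1) * (eps / (L + 1))); [apply Rmult_lt_compat_l; lra|].
  right. field. lra.
Qed.

Lemma gas_solution_C2 a f p : (forall x, is_derive f x (p x)) ->
  (forall x, is_derive p x (a * p x - P (f x))) -> C2 f.
Proof.
  intros Hf Hp x.
  assert (Dp1 : Derive f = p) by (apply functional_extensionality; intros y; now apply is_derive_unique).
  rewrite Dp1. split; [now exists (p x)|]. split; [now exists (a * p x - P (f x))|].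
  replace (Derive p) with (fun y => a * p y - P (f y))
    by (apply functional_extensionality; intros y; symmetry; now apply is_derive_unique).
  apply continuity_pt_filterlim, continuity_pt_minus.
  - apply continuity_pt_scal. exact (is_derive_continuity_pt _ _ _ (Hp x)).
  - apply (continuity_pt_comp f P); [exact (is_derive_continuity_pt _ _ _ (Hf x))|apply P_continuity].
Qed.

Lemma gas_solution_exists a y0 v0 : exists f p : R -> R,
  (forall x, is_derive f x (p x)) /\ (forall x, is_derive p x (a * p x - P (f x))) /\
  f 0 = y0 /\ p 0 = v0.
Proof.
  apply (lipschitz2_global_solution (fun u v => a * v - P u) (Rabs a + L)).
  intros u1 v1 u2 v2.
  replace (a * v1 - P u1 - (a * v2 - P u2)) with (a * (v1 - v2) - (P u1 - P u2)) by ring.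
  eapply Rle_trans; [apply Rabs_triang|]. rewrite Rabs_Ropp, Rabs_mult.
  pose proof P_lip_nonneg. pose proof (P_lip u1 u2). pose proof (Rabs_pos a).
  pose proof (Rabs_pos (u1 - u2)). pose proof (Rabs_pos (v1 - v2)). nra.
Qed.

(* [e^((1+L)x) ((f-1)^2 + p^2)] is nondecreasing, so the equilibrium (1,0) is reached only by
   the constant solution. *)
Lemma equilibrium_unreachable a f p xs : 0 <= a -> 0 <= xs ->
  (forall x, 0 <= x <= xs -> is_derive f x (p x) /\ is_derive p x (a * p x - P (f x))) ->
  f xs = 1 -> p xs = 0 -> f 0 = 1 /\ p 0 = 0.
Proof.
  intros Ha Hxs Hd Hf1 Hp0. pose proof P_lip_nonneg as HL.
  set (g := fun y => exp ((1 + L) * y) * ((f y - 1) ^ 2 + p y ^ 2)).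
  assert (Hg : g 0 <= g xs).
  { apply (le_of_deriv_nonneg g (fun x => exp ((1 + L) * x) * ((1 + L) * ((f x - 1) ^ 2 + p x ^ 2)
        + 2 * (f x - 1) * p x + 2 * p x * (a * p x - P (f x))))); [exact Hxs| |].
    - intros x Hx. destruct (Hd x Hx) as [Hf Hp]. unfold g. auto_derive.
      + repeat split; [now exists (p x)|now exists (a * p x - P (f x))].
      + rewrite_Derive f x (p x) Hf. rewrite_Derive p x (a * p x - P (f x)) Hp. ring.
    - intros x Hx. apply Rmult_le_pos; [left; apply exp_pos|].
      set (X := f x - 1). set (Y := p x).
      assert (HQ : Rabs (P (f x)) <= L * Rabs X).
      { unfold X. rewrite <- (Rminus_0_r (P (f x))), <- P_1. apply P_lip. }
      pose proof (two_abs_mul_le X Y).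
      assert (Y * P (f x) <= Rabs Y * Rabs (P (f x))) by (rewrite <- Rabs_mult; apply Rle_abs).
      assert (- (X * Y) <= Rabs X * Rabs Y) by (rewrite <- Rabs_mult, <- Rabs_Ropp; apply Rle_abs).
      assert (Rabs Y * Rabs (P (f x)) <= L * (Rabs X * Rabs Y)).
      { replace (L * (Rabs X * Rabs Y)) with (Rabs Y * (L * Rabs X)) by ring.
        apply Rmult_le_compat_l; [apply Rabs_pos|exact HQ]. }
      assert (0 <= a * Y ^ 2) by (apply Rmult_le_pos; [exact Ha|apply pow2_ge_0]).
      assert (L * (2 * Rabs X * Rabs Y) <= L * (X ^ 2 + Y ^ 2)) by (apply Rmult_le_compat_l; lra).
      nra. }
  unfold g in Hg. rewrite Hf1, Hp0, Rmult_0_r, exp_0, Rmult_1_l in Hg.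
  replace ((1 - 1) ^ 2 + 0 ^ 2) with 0 in Hg by ring. rewrite Rmult_0_r in Hg.
  pose proof (pow2_ge_0 (f 0 - 1)). pose proof (pow2_ge_0 (p 0)).
  assert (Ef : f 0 - 1 = 0) by (apply Rsqr_0_uniq; unfold Rsqr; simpl in *; nra).
  assert (Ep : p 0 = 0) by (apply Rsqr_0_uniq; unfold Rsqr; simpl in *; nra).
  split; lra.
Qed.

Lemma solution_distance_bound a a' f p f' p' X B : 0 <= a' -> 0 <= X ->
  (forall x, 0 <= x <= X -> Rabs (p x) <= B) ->
  (forall x, 0 <= x <= X -> is_derive f x (p x) /\ is_derive p x (a * p x - P (f x))) ->
  (forall x, 0 <= x <= X -> is_derive f' x (p' x) /\ is_derive p' x (a' * p' x - P (f' x))) ->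
  forall x, 0 <= x <= X ->
  (f x - f' x) ^ 2 + (p x - p' x) ^ 2 <=
    exp ((3 + 2 * a' + L) * X) * ((f 0 - f' 0) ^ 2 + (p 0 - p' 0) ^ 2 + (a - a') ^ 2 * B ^ 2).
Proof.
  intros Ha' HX HB Hd Hd' x Hx. pose proof P_lip_nonneg as HL.
  set (k := 3 + 2 * a' + L). set (del := (a - a') ^ 2 * B ^ 2).
  assert (Hdel : 0 <= del) by (apply Rmult_le_pos; apply pow2_ge_0).
  set (g := fun y => exp (- (k * y)) * ((f y - f' y) ^ 2 + (p y - p' y) ^ 2 + del)).
  assert (Hg : g x <= g 0).
  { apply (ge_of_deriv_nonpos g (fun y => exp (- (k * y)) * (- k * ((f y - f' y) ^ 2
        + (p y - p' y) ^ 2 + del) + 2 * (f y - f' y) * (p y - p' y)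
        + 2 * (p y - p' y) * ((a * p y - P (f y)) - (a' * p' y - P (f' y)))))); [lra| |].
    - intros y Hy. destruct (Hd y ltac:(lra)) as [Hf Hp]. destruct (Hd' y ltac:(lra)) as [Hf' Hp'].
      unfold g. auto_derive; [repeat split; eexists; eauto|].
      rewrite_Derive f y (p y) Hf. rewrite_Derive p y (a * p y - P (f y)) Hp.
      rewrite_Derive f' y (p' y) Hf'. rewrite_Derive p' y (a' * p' y - P (f' y)) Hp'. ring.
    - intros y Hy. rewrite <- (Rmult_0_r (exp (- (k * y)))).
      apply Rmult_le_compat_l; [left; apply exp_pos|].
      replace ((a * p y - P (f y)) - (a' * p' y - P (f' y)))
        with (a' * (p y - p' y) + (a - a') * p y - (P (f y) - P (f' y))) by ring.
      apply distance_rate_nonpos; [exact HL|exact Ha'|apply P_lip|].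
      apply Rmult_le_compat_l; [apply pow2_ge_0|].
      rewrite <- (pow2_abs (p y)). apply pow_incr. split; [apply Rabs_pos|apply HB; lra]. }
  unfold g in Hg. rewrite Rmult_0_r, Ropp_0, exp_0, Rmult_1_l in Hg.
  assert (Hkx : 0 <= k * x) by (unfold k; nra).
  assert (Hexp : exp (k * x) <= exp (k * X)).
  { destruct (Req_dec x X) as [->|]; [lra|left; apply exp_increasing; unfold k; nra]. }
  rewrite exp_Ropp in Hg. pose proof (exp_pos (k * x)).
  pose proof (pow2_ge_0 (f x - f' x)). pose proof (pow2_ge_0 (p x - p' x)).
  pose proof (pow2_ge_0 (f 0 - f' 0)). pose proof (pow2_ge_0 (p 0 - p' 0)).
  apply Rmult_le_compat_l with (r := exp (k * x)) in Hg; [|lra].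
  rewrite <- Rmult_assoc, Rinv_r, Rmult_1_l in Hg by lra.
  apply Rle_trans with (exp (k * x) * ((f 0 - f' 0) ^ 2 + (p 0 - p' 0) ^ 2 + del)); [lra|].
  apply Rmult_le_compat_r; [lra|exact Hexp].
Qed.

Lemma flux_stays_nonpos a f p x0 : 0 <= a ->
  (forall x, 0 <= x -> is_derive p x (a * p x - P (f x))) -> 0 <= x0 -> p x0 <= 0 ->
  forall y, x0 <= y -> p y <= p x0.
Proof.
  intros Ha Hp Hx0 Hpx0 y Hy.
  pose proof (le_exp_growth_of_deriv a p (fun x => P (f x)) x0 y Hy
    ltac:(intros x Hx; apply Hp; lra) ltac:(intros x _; apply P_nonneg)) as Hg.
  pose proof (exp_ineq1_le (a * (y - x0))). assert (0 <= a * (y - x0)) by nra.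
  nra.
Qed.

Definition gas_front (a : R) (f p : R -> R) : Prop :=
  (forall x, is_derive f x (p x)) /\ (forall x, 0 <= x -> is_derive p x (a * p x - P (f x))) /\
  (forall x, 0 <= x -> 0 <= f x <= 1) /\ is_lim f p_infty 1 /\ is_lim p p_infty 0.

Section Front.

Variables (a : R) (f p : R -> R).
Hypothesis a_nonneg : 0 <= a.
Hypothesis front : gas_front a f p.

Lemma front_flux_nonneg x : 0 <= x -> 0 <= p x.
Proof.
  intros Hx. destruct front as [_ [Hp [_ [_ Hlp]]]].
  apply Rnot_lt_le. intros Hneg.
  pose proof (flux_stays_nonpos a f p x a_nonneg Hp Hx (Rlt_le _ _ Hneg)) as Hbelow.
  destruct (is_lim_p_infty_arbitrarily_far p 0 Hlp (- p x) ltac:(lra) x) as [y [Hy Hpy]].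
  specialize (Hbelow y (Rlt_le _ _ Hy)). rewrite Rminus_0_r in Hpy.
  apply Rabs_def2 in Hpy. lra.
Qed.

Lemma front_start_below_one : 0 < p 0 -> f 0 < 1.
Proof.
  intros Hp0. destruct front as [Hf [_ [Hr _]]].
  destruct (Rle_lt_or_eq_dec (f 0) 1) as [|E]; [apply Hr; lra|assumption|].
  destruct (deriv_pos_right f 0 (p 0) 1 (Hf 0) Hp0 Rlt_0_1) as [y [Hy Hfy]].
  specialize (Hr y ltac:(lra)). lra.
Qed.

Lemma front_below_one : f 0 < 1 -> forall x, 0 <= x -> f x < 1.
Proof.
  intros Hf0 x Hx. destruct front as [Hf [Hp [Hr _]]].
  destruct (Rle_lt_or_eq_dec (f x) 1) as [|E]; [apply Hr; lra|assumption|].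
  assert (Hx0 : 0 < x) by (destruct (Req_dec x 0) as [->|]; lra).
  assert (Hpx : p x = 0).
  { destruct (Rle_lt_or_eq_dec 0 (p x) (front_flux_nonneg x Hx)) as [Hpos|]; [|congruence].
    destruct (deriv_pos_right f x (p x) 1 (Hf x) Hpos Rlt_0_1) as [y [Hy Hfy]].
    specialize (Hr y ltac:(lra)). lra. }
  destruct (equilibrium_unreachable a f p x a_nonneg Hx) as [E0 _]; [|exact E|exact Hpx|lra].
  intros y Hy. split; [apply Hf|apply Hp; lra].
Qed.

Lemma front_flux_pos : f 0 < 1 -> forall x, 0 <= x -> 0 < p x.
Proof.
  intros Hf0 x Hx. destruct front as [Hf [Hp [_ [Hlf _]]]].
  destruct (Rle_lt_or_eq_dec 0 (p x) (front_flux_nonneg x Hx)) as [|Hz]; [assumption|].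
  exfalso.
  assert (Hzero : forall y, x <= y -> p y = 0).
  { intros y Hy. pose proof (flux_stays_nonpos a f p x a_nonneg Hp Hx (Req_le _ _ (eq_sym Hz)) y Hy).
    pose proof (front_flux_nonneg y ltac:(lra)). lra. }
  assert (Hconst : forall y, x <= y -> f x = f y).
  { intros y Hy. apply (const_of_deriv_zero f p x y Hy); [intros; apply Hf|].
    intros z Hz'. apply Hzero. lra. }
  assert (Hfx : f x = 1).
  { apply eq_of_abs_lt_all. intros eps Heps.
    destruct (is_lim_p_infty_arbitrarily_far f 1 Hlf eps Heps x) as [y [Hy Hfy]].
    rewrite <- Hconst in Hfy by lra. exact Hfy. }
  pose proof (front_below_one Hf0 x Hx). lra.
Qed.

Lemma front_increasing : f 0 < 1 -> forall u v, 0 <= u -> u < v -> f u < f v.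
Proof.
  intros Hf0 u v Hu Huv. destruct front as [Hf _].
  apply (lt_of_deriv_pos f p u v Huv); [intros; apply Hf|].
  intros x Hx. apply front_flux_pos; lra.
Qed.

(* The flux as a function of the temperature along the front, [p = Phi(f)]. *)
Lemma front_phase_curve : f 0 < 1 ->
  exists Phi : R -> R,
    (forall z, f 0 <= z < 1 -> 0 < Phi z) /\
    (forall z, f 0 < z < 1 -> is_derive Phi z (a - P z / Phi z)) /\
    (forall z, f 0 < z < 1 -> Phi z < p 0 + a * (z - f 0)).
Proof.
  intros Hf0. destruct front as [Hf [Hp [_ [Hlf _]]]].
  pose proof (front_flux_pos Hf0) as Hpos. pose proof (front_below_one Hf0) as Hlt.
  assert (Hsurj : forall z, f 0 <= z < 1 -> exists x, 0 <= x /\ f x = z).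
  { intros z Hz. destruct (is_lim_p_infty_arbitrarily_far f 1 Hlf (1 - z) ltac:(lra) 0)
      as [X [HX HfX]].
    apply Rabs_def2 in HfX.
    destruct (IVT_cor (fun x => f x - z) 0 X) as [x [Hx Ex]].
    - intros x. apply continuity_pt_minus; [exact (is_derive_continuity_pt _ _ _ (Hf x))|].
      apply continuity_pt_const. now intros u v.
    - lra.
    - assert (0 <= (z - f 0) * (f X - z)) by (apply Rmult_le_pos; lra). nra.
    - exists x. split; lra. }
  set (tau := fun z => epsilon (inhabits 0) (fun x => 0 <= x /\ f x = z)).
  assert (Htau : forall z, f 0 <= z < 1 -> 0 <= tau z /\ f (tau z) = z)
    by (intros z Hz; apply epsilon_spec, Hsurj, Hz).
  clearbody tau.
  exists (fun z => p (tau z)). split; [|split].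
  - intros z Hz. apply Hpos, Htau, Hz.
  - intros z Hz. destruct (Htau z ltac:(lra)) as [Hz1 Hz2].
    assert (Dt : is_derive tau z (1 / p (tau z)))
      by (apply (is_derive_inverse f p tau 1 z); auto; intros; apply Htau; lra).
    pose proof (Hpos (tau z) Hz1).
    replace (a - P z / p (tau z)) with (scal (1 / p (tau z)) (a * p (tau z) - P (f (tau z)))).
    + exact (is_derive_comp p tau z _ _ (Hp _ Hz1) Dt).
    + unfold scal; simpl; unfold mult; simpl. rewrite Hz2. field. lra.
  - intros z Hz. destruct (Htau z ltac:(lra)) as [Hz1 Hz2].
    assert (Ht0 : 0 < tau z) by (destruct (Req_dec (tau z) 0) as [E|]; [rewrite E in Hz2|]; lra).
    enough (p (tau z) - a * f (tau z) < p 0 - a * f 0) by (rewrite Hz2 in *; lra).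
    apply (gt_of_deriv_neg (fun x => p x - a * f x) (fun x => - P (f x))); [exact Ht0| |].
    + intros x Hx. replace (- P (f x)) with ((a * p x - P (f x)) - a * p x) by ring.
      apply (is_derive_minus p (fun y => a * f y)); [apply Hp; lra|].
      apply (is_derive_scal f x a), Hf.
    + intros x Hx. pose proof (P_pos (f x) (Hlt x ltac:(lra))). lra.
Qed.

End Front.

(* Along the faster front [W = p1 - Phi2(f1)] stays positive, incompatible with [p1 -> 0]. *)
Lemma fronts_not_ordered a1 a2 r f1 p1 f2 p2 : 0 <= r -> 0 <= a2 -> a2 < a1 ->
  gas_front a1 f1 p1 -> gas_front a2 f2 p2 -> f2 0 < f1 0 -> f1 0 < 1 ->
  p1 0 = a1 * (f1 0 + r) -> p2 0 = a2 * (f2 0 + r) -> False.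
Proof.
  intros Hr Ha2 Ha12 HF1 HF2 H21 H1 Hp1 Hp2.
  assert (Ha1 : 0 <= a1) by lra.
  destruct (front_phase_curve a2 f2 p2 Ha2 HF2 ltac:(lra)) as [Phi [HPhi_pos [HPhi_der HPhi_lt]]].
  pose proof (front_below_one a1 f1 p1 Ha1 HF1 H1) as Hlt1.
  pose proof (front_flux_pos a1 f1 p1 Ha1 HF1 H1) as Hpos1.
  assert (Hrange : forall x, 0 <= x -> f2 0 < f1 x < 1).
  { intros x Hx. split; [|now apply Hlt1].
    destruct (Req_dec x 0) as [->|]; [lra|].
    pose proof (front_increasing a1 f1 p1 Ha1 HF1 H1 0 x ltac:(lra) ltac:(lra)). lra. }
  destruct HF1 as [Hf1 [Hp1d [_ [_ Hlp1]]]].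
  set (W := fun x => p1 x - Phi (f1 x)).
  set (dW := fun x => (a1 * p1 x - P (f1 x)) - p1 x * (a2 - P (f1 x) / Phi (f1 x))).
  assert (HdW : forall x, 0 <= x -> is_derive W x (dW x)).
  { intros x Hx.
    pose proof (is_derive_comp Phi f1 x _ _ (HPhi_der (f1 x) (Hrange x Hx)) (Hf1 x)) as D.
    pose proof (is_derive_minus p1 (fun y => Phi (f1 y)) x _ _ (Hp1d x Hx) D) as DW.
    unfold minus, plus, opp, scal in DW; simpl in DW; unfold mult in DW; simpl in DW.
    unfold W, dW. replace (a1 * p1 x - P (f1 x) - p1 x * (a2 - P (f1 x) / Phi (f1 x)))
      with (a1 * p1 x - P (f1 x) + - (p1 x * (a2 - P (f1 x) / Phi (f1 x)))) by ring.
    exact DW. }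
  assert (HdW_pos : forall x, 0 <= x -> 0 < W x -> 0 < dW x).
  { intros x Hx HWx. pose proof (Hrange x Hx).
    assert (HPhi : 0 < Phi (f1 x)) by (apply HPhi_pos; lra).
    pose proof (Hpos1 x Hx). pose proof (P_nonneg (f1 x)).
    replace (dW x) with ((a1 - a2) * p1 x + P (f1 x) * W x / Phi (f1 x))
      by (unfold dW, W; field; lra).
    assert (0 <= P (f1 x) * W x / Phi (f1 x))
      by (apply Rmult_le_pos; [nra|left; apply Rinv_0_lt_compat; lra]).
    nra. }
  assert (HW0 : 0 < W 0).
  { unfold W. specialize (HPhi_lt (f1 0) ltac:(lra)). rewrite Hp2 in HPhi_lt. rewrite Hp1.
    pose proof (proj1 (proj2 (proj2 HF2)) 0 (Rle_refl 0)). nra. }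
  pose proof (stays_above_start W dW HdW HdW_pos HW0) as Hstay.
  destruct (is_lim_p_infty_arbitrarily_far p1 0 Hlp1 (W 0) HW0 0) as [x [Hx Hp1x]].
  rewrite Rminus_0_r in Hp1x. apply Rabs_def2 in Hp1x.
  specialize (Hstay x ltac:(lra)). pose proof (Hrange x ltac:(lra)).
  assert (0 < Phi (f1 x)) by (apply HPhi_pos; lra). unfold W in *. lra.
Qed.

Definition flux_reverses (f p : R -> R) : Prop :=
  exists x, 0 <= x /\ p x < 0 /\ forall y, 0 <= y <= x -> f y < 1.

Definition overshoots (f p : R -> R) : Prop :=
  exists x, 0 <= x /\ 1 < f x /\ forall y, 0 <= y <= x -> 0 < p y.

Lemma flux_reverses_overshoots_exclusive f p : flux_reverses f p -> overshoots f p -> False.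
Proof.
  intros [x1 [Hx1 [Hp1 Hf1]]] [x2 [Hx2 [Hf2 Hp2]]].
  destruct (Rle_dec x2 x1); [specialize (Hf1 x2 ltac:(lra))|specialize (Hp2 x1 ltac:(lra))]; lra.
Qed.

Section Trapped.

Variables (a : R) (f p : R -> R).
Hypothesis f_deriv : forall x, is_derive f x (p x).
Hypothesis p_deriv : forall x, is_derive p x (a * p x - P (f x)).

Lemma trapped_of_no_exit : 0 <= a -> f 0 < 1 -> 0 < p 0 ->
  ~ flux_reverses f p -> ~ overshoots f p -> forall x, 0 <= x -> 0 < p x /\ f x < 1.
Proof.
  intros Ha Hf0 Hp0 Hnrev Hnover x1 Hx1.
  pose proof (fun x => is_derive_continuity_pt _ _ _ (f_deriv x)) as Cf.
  pose proof (fun x => is_derive_continuity_pt _ _ _ (p_deriv x)) as Cp.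
  apply NNPP. intros Hexit.
  destruct (first_exit (fun y => 0 < p y /\ f y < 1) 0 x1) as [x0 [Hx0 [Hbelow Hout]]];
    [exact Hx1|lra|exact Hexit| |].
  { intros x Hx [Hpx Hfx].
    destruct (continuity_pt_gt p x 0 (Cp x) Hpx) as [d1 [Hd1 Hd1']].
    destruct (continuity_pt_lt f x 1 (Cf x) Hfx) as [d2 [Hd2 Hd2']].
    exists (Rmin d1 d2). split; [now apply Rmin_glb_lt|].
    pose proof (Rmin_l d1 d2); pose proof (Rmin_r d1 d2).
    intros y Hy. split; [apply Hd1'|apply Hd2']; rewrite Rabs_right; lra. }
  assert (Hpx0 : 0 <= p x0)
    by (apply (continuity_pt_le_of_left p x0 x0 0 (Cp x0)); [lra|intros y Hy; apply Hbelow; lra]).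
  assert (Hfx0 : f x0 <= 1).
  { enough (0 <= 1 - f x0) by lra.
    apply (continuity_pt_le_of_left (fun y => 1 - f y) x0 x0 0); [|lra|].
    - apply continuity_pt_minus; [apply continuity_pt_const; now intros u v|apply Cf].
    - intros y Hy. enough (f y < 1) by lra. apply Hbelow. lra. }
  destruct (Req_dec (p x0) 0) as [Hpz|Hpnz].
  - destruct (Req_dec (f x0) 1) as [Hf1|Hf1].
    + destruct (equilibrium_unreachable a f p x0 Ha ltac:(lra)) as [E _]; [|exact Hf1|exact Hpz|lra].
      intros x _. split; [apply f_deriv|apply p_deriv].
    + destruct (continuity_pt_lt f x0 1 (Cf x0)) as [d [Hd Hd']]; [lra|].
      destruct (deriv_neg_right p x0 _ d (p_deriv x0)) as [y [Hy Hpy]]; [|exact Hd|].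
      { rewrite Hpz. pose proof (P_pos (f x0) ltac:(lra)). lra. }
      apply Hnrev. exists y. split; [lra|]. split; [lra|].
      intros z Hz. destruct (Rlt_dec z x0); [apply Hbelow; lra|]. apply Hd'. rewrite Rabs_right; lra.
  - assert (Hf1 : f x0 = 1) by (destruct (Req_dec (f x0) 1); [assumption|]; exfalso; apply Hout; lra).
    destruct (continuity_pt_gt p x0 0 (Cp x0)) as [d [Hd Hd']]; [lra|].
    destruct (deriv_pos_right f x0 (p x0) d (f_deriv x0)) as [y [Hy Hfy]]; [lra|exact Hd|].
    apply Hnover. exists y. split; [lra|]. split; [lra|].
    intros z Hz. destruct (Rlt_dec z x0); [apply Hbelow; lra|]. apply Hd'. rewrite Rabs_right; lra.
Qed.

Hypothesis a_pos : 0 < a.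
Hypothesis trapped : forall x, 0 <= x -> 0 < p x /\ f x < 1.

Lemma trapped_increasing u v : 0 <= u -> u < v -> f u < f v.
Proof.
  intros Hu Huv. apply (lt_of_deriv_pos f p u v Huv); [intros; apply f_deriv|].
  intros x Hx. apply trapped. lra.
Qed.

(* Otherwise [P f] stays above some [m > 0]: [p] must become small somewhere, since [f < 1],
   and then [p - m/a] is a subsolution that drives [p] below zero. *)
Lemma trapped_reaches_one eps : 0 < eps -> exists X, 0 <= X /\ 1 - eps < f X.
Proof.
  intros Heps. apply NNPP. intros Hno.
  assert (Hle : forall x, 0 <= x -> f 0 <= f x <= 1 - eps).
  { intros x Hx. split; [|apply Rnot_lt_le; intros Hlt; apply Hno; now exists x].
    destruct (Req_dec x 0) as [->|]; [lra|]. left. apply trapped_increasing; lra. }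
  destruct (continuity_ab_min P (f 0) (1 - eps)) as [um [Hum Hum_range]].
  { specialize (Hle 0 (Rle_refl 0)). lra. }
  { intros u _. apply P_continuity. }
  set (m := P um). assert (Hm : 0 < m) by (apply P_pos; lra).
  assert (HPf : forall x, 0 <= x -> m <= P (f x)) by (intros x Hx; apply Hum, Hle, Hx).
  assert (Hslow : exists x, 0 <= x /\ p x < m / (2 * a)).
  { apply NNPP. intros Hfast.
    set (X := 2 * a * (2 - f 0) / m).
    pose proof (trapped 0 (Rle_refl 0)) as [_ Hf0].
    assert (HX : 0 < X) by (apply Rdiv_lt_0_compat; [nra|exact Hm]).
    assert (f 0 - m / (2 * a) * 0 <= f X - m / (2 * a) * X).
    { apply (le_of_deriv_nonneg (fun x => f x - m / (2 * a) * x) (fun x => p x - m / (2 * a)));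
        [lra| |].
      - intros x _. auto_derive; [now exists (p x)|]. rewrite_Derive f x (p x) (f_deriv x). ring.
      - intros x Hx. enough (m / (2 * a) <= p x) by lra.
        apply Rnot_lt_le. intros Hlt. apply Hfast. exists x. split; [lra|exact Hlt]. }
    assert (m / (2 * a) * X = 2 - f 0) by (unfold X; field; lra).
    pose proof (trapped X ltac:(lra)). lra. }
  destruct Hslow as [x2 [Hx2 Hpx2]].
  set (y := x2 + ln 2 / a).
  assert (Hln2 : 0 < ln 2) by (rewrite <- ln_1; apply ln_increasing; lra).
  assert (Hy : x2 < y) by (unfold y; pose proof (Rdiv_lt_0_compat _ _ Hln2 a_pos); lra).
  pose proof (le_exp_growth_of_deriv a (fun x => p x - m / a) (fun x => P (f x) - m) x2 y
    ltac:(lra)) as Hgrowth.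
  replace (a * (y - x2)) with (ln 2) in Hgrowth by (unfold y; field; lra).
  rewrite exp_ln in Hgrowth by lra.
  assert (Hm2 : m / (2 * a) * 2 = m / a) by (field; lra).
  assert (p y - m / a <= 2 * (p x2 - m / a)); [apply Hgrowth|].
  - intros x Hx. replace (a * (p x - m / a) - (P (f x) - m)) with (a * p x - P (f x)) by (field; lra).
    apply is_derive_minus_const, p_deriv.
  - intros x Hx. specialize (HPf x ltac:(lra)). lra.
  - pose proof (trapped y ltac:(lra)). lra.
Qed.

Lemma trapped_temperature_limit : is_lim f p_infty 1.
Proof.
  apply is_lim_p_infty_Finite. intros eps Heps.
  destruct (trapped_reaches_one eps Heps) as [X [HX HfX]]. exists X. intros x Hx.
  pose proof (trapped_increasing X x HX Hx). pose proof (trapped x ltac:(lra)).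
  rewrite Rabs_left; lra.
Qed.

(* Once [P f < a eps], a flux [p >= eps] would keep growing and push [f] past 1. *)
Lemma trapped_flux_limit : is_lim p p_infty 0.
Proof.
  apply is_lim_p_infty_Finite. intros eps Heps.
  destruct (continuity_pt_lt P 1 (a * eps) (P_continuity 1)) as [d [Hd Hd']]; [rewrite P_1; nra|].
  destruct (proj1 (is_lim_p_infty_Finite f 1) trapped_temperature_limit d Hd) as [X1 HX1].
  pose proof (Rmax_l X1 0). pose proof (Rmax_r X1 0).
  exists (Rmax X1 0). intros x Hx.
  pose proof (trapped x ltac:(lra)) as [Hpx _].
  rewrite Rminus_0_r, Rabs_right by lra.
  apply Rnot_le_lt. intros Hge.
  assert (Hstay : forall z, x <= z -> eps <= p z).
  { intros z Hz.
    pose proof (le_exp_growth_of_deriv a (fun y => eps - p y) (fun y => a * eps - P (f y)) x z Hz)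
      as Hgrowth.
    assert (0 <= exp (a * (z - x)) * (p x - eps)) by (apply Rmult_le_pos; [left; apply exp_pos|lra]).
    enough (eps - p z <= exp (a * (z - x)) * (eps - p x)) by nra.
    apply Hgrowth.
    - intros y Hy. replace (a * (eps - p y) - (a * eps - P (f y))) with (- (a * p y - P (f y)))
        by ring.
      auto_derive; [now exists (a * p y - P (f y))|]. rewrite_Derive p y (a * p y - P (f y)) (p_deriv y).
      ring.
    - intros y Hy. enough (P (f y) < a * eps) by lra. apply Hd', HX1. lra. }
  pose proof (trapped 0 (Rle_refl 0)) as [_ Hf0].
  set (y := x + (2 - f 0) / eps).
  assert (Hy : x < y) by (unfold y; pose proof (Rdiv_lt_0_compat (2 - f 0) eps ltac:(lra) Heps); lra).
  assert (f x - eps * x <= f y - eps * y).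
  { apply (le_of_deriv_nonneg (fun z => f z - eps * z) (fun z => p z - eps)); [lra| |].
    - intros z _. auto_derive; [now exists (p z)|]. rewrite_Derive f z (p z) (f_deriv z). ring.
    - intros z Hz. specialize (Hstay z ltac:(lra)). lra. }
  assert (eps * y = eps * x + (2 - f 0)) by (unfold y; field; lra).
  assert (f 0 <= f x) by (destruct (Req_dec x 0) as [->|]; [lra|left; apply trapped_increasing; lra]).
  pose proof (trapped y ltac:(lra)). lra.
Qed.

Lemma trapped_front : 0 <= f 0 -> gas_front a f p.
Proof.
  intros Hf0. split; [exact f_deriv|]. split; [intros x _; apply p_deriv|].
  split; [|exact (conj trapped_temperature_limit trapped_flux_limit)].
  intros x Hx. pose proof (trapped x Hx). split; [|lra].
  destruct (Req_dec x 0) as [->|]; [lra|]. pose proof (trapped_increasing 0 x ltac:(lra) ltac:(lra)).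
  lra.
Qed.

End Trapped.

(** * Shooting on the regression velocity *)

Section Shooting.

Variables (eta r c_max : R) (theta_s : R -> R).
Hypothesis eta_pos : 0 < eta.
Hypothesis r_nonneg : 0 <= r.
Hypothesis c_max_neg : c_max < 0.
Hypothesis ts_cont : continuous_on_closed theta_s c_max 0.
Hypothesis ts_range : forall c, c_max <= c <= 0 -> 0 <= theta_s c <= 1.
Hypothesis ts_decr : strictly_decreasing_on theta_s c_max 0.
Hypothesis ts_0 : theta_s 0 = 0.
Hypothesis ts_c_max : theta_s c_max = 1.

Variables (f p : R -> R -> R).
Hypothesis f_deriv : forall c x, is_derive (f c) x (p c x).
Hypothesis p_deriv : forall c x, is_derive (p c) x (- eta * c * p c x - P (f c x)).
Hypothesis f_init : forall c, f c 0 = theta_s c.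
Hypothesis p_init : forall c, p c 0 = - eta * c * (theta_s c + r).

Lemma shooting_data_estimate B c c' e : c_max <= c <= 0 -> c_max <= c' <= 0 -> e <= 1 ->
  Rabs (theta_s c - theta_s c') <= e -> Rabs (c - c') <= e ->
  (theta_s c - theta_s c') ^ 2 + (- eta * c * (theta_s c + r) - - eta * c' * (theta_s c' + r)) ^ 2
    + (- eta * c - - eta * c') ^ 2 * B ^ 2
  <= e * (1 + (- eta * c_max + eta * (1 + r)) ^ 2 + eta ^ 2 * B ^ 2).
Proof.
  intros Hc Hc' He1 Hu Hw. pose proof (ts_range c' Hc').
  set (u := theta_s c - theta_s c') in *.
  assert (He : 0 <= e) by (pose proof (Rabs_pos u); lra).
  assert (Ha : Rabs (- eta * c - - eta * c') <= e * eta).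
  { replace (- eta * c - - eta * c') with (- eta * (c - c')) by ring.
    rewrite Rabs_mult, Rabs_Ropp, (Rabs_right eta) by lra. nra. }
  assert (Hv : Rabs (- eta * c * (theta_s c + r) - - eta * c' * (theta_s c' + r))
               <= e * (- eta * c_max + eta * (1 + r))).
  { replace (- eta * c * (theta_s c + r) - - eta * c' * (theta_s c' + r))
      with (- eta * c * u + (- eta * c - - eta * c') * (theta_s c' + r)) by (unfold u; ring).
    eapply Rle_trans; [apply Rabs_triang|].
    rewrite (Rabs_mult (- eta * c) u), (Rabs_mult _ (theta_s c' + r)).
    rewrite (Rabs_right (- eta * c)) by nra. rewrite (Rabs_right (theta_s c' + r)) by lra.
    assert (- eta * c * Rabs u <= - eta * c_max * e)
      by (apply Rmult_le_compat; [nra|apply Rabs_pos|nra|lra]).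
    assert (Rabs (- eta * c - - eta * c') * (theta_s c' + r) <= e * eta * (1 + r))
      by (apply Rmult_le_compat; try lra; apply Rabs_pos).
    lra. }
  assert (Hsq : forall z m, 0 <= m -> Rabs z <= e * m -> z ^ 2 <= e * m ^ 2).
  { intros z m Hm Hz. rewrite <- pow2_abs.
    apply Rle_trans with ((e * m) ^ 2); [apply pow_incr; split; [apply Rabs_pos|exact Hz]|].
    replace ((e * m) ^ 2) with (e * (e * m ^ 2)) by ring.
    pose proof (pow2_ge_0 m). apply Rmult_le_compat_l; nra. }
  pose proof (Hsq u 1 ltac:(lra) ltac:(lra)).
  pose proof (Hsq _ (- eta * c_max + eta * (1 + r)) ltac:(nra) Hv).
  pose proof (Hsq (- eta * c - - eta * c') eta ltac:(lra) Ha).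
  assert ((- eta * c - - eta * c') ^ 2 * B ^ 2 <= e * eta ^ 2 * B ^ 2)
    by (apply Rmult_le_compat_r; [apply pow2_ge_0|lra]).
  lra.
Qed.

Lemma shooting_data_close B c eps : c_max <= c <= 0 -> 0 < eps -> exists d, 0 < d /\
  forall c', c_max <= c' <= 0 -> Rabs (c' - c) < d ->
  (theta_s c - theta_s c') ^ 2 + (- eta * c * (theta_s c + r) - - eta * c' * (theta_s c' + r)) ^ 2
    + (- eta * c - - eta * c') ^ 2 * B ^ 2 < eps.
Proof.
  intros Hc Heps.
  set (k := 1 + (- eta * c_max + eta * (1 + r)) ^ 2 + eta ^ 2 * B ^ 2).
  assert (Hk : 1 <= k).
  { pose proof (pow2_ge_0 (- eta * c_max + eta * (1 + r))). pose proof (pow2_ge_0 eta).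
    pose proof (pow2_ge_0 B). unfold k. nra. }
  set (e := Rmin 1 (eps / (2 * k))).
  assert (He : 0 < e) by (apply Rmin_glb_lt; [lra|apply Rdiv_lt_0_compat; lra]).
  assert (He1 : e <= 1) by apply Rmin_l. assert (He2 : e <= eps / (2 * k)) by apply Rmin_r.
  destruct (ts_cont c Hc e He) as [d1 [Hd1 Hd1']].
  exists (Rmin d1 e). split; [now apply Rmin_glb_lt|].
  intros c' Hc' Hcc'. pose proof (Rmin_l d1 e). pose proof (Rmin_r d1 e).
  eapply Rle_lt_trans; [apply (shooting_data_estimate B c c' e Hc Hc' He1)|].
  - rewrite Rabs_minus_sym. left. apply Hd1'; lra.
  - rewrite Rabs_minus_sym. lra.
  - apply Rle_lt_trans with (eps / (2 * k) * k); [apply Rmult_le_compat_r; lra|].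
    replace (eps / (2 * k) * k) with (eps / 2) by (field; lra). lra.
Qed.

Lemma shooting_solutions_close c X tau : c_max <= c <= 0 -> 0 <= X -> 0 < tau ->
  exists d, 0 < d /\ forall c', c_max <= c' <= 0 -> Rabs (c' - c) < d ->
  forall x, 0 <= x <= X -> (f c x - f c' x) ^ 2 + (p c x - p c' x) ^ 2 < tau.
Proof.
  intros Hc HX Htau. pose proof P_lip_nonneg as HL.
  destruct (continuity_ab_maj (fun y => Rabs (p c y)) 0 X HX) as [xm [Hxm _]].
  { intros y _. apply (continuity_pt_comp (p c) Rabs);
      [exact (is_derive_continuity_pt _ _ _ (p_deriv c y))|apply Rcontinuity_abs]. }
  set (B := Rabs (p c xm)).
  set (E := exp ((3 + 2 * (- eta * c_max) + L) * X)).
  assert (HE : 0 < E) by apply exp_pos.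
  destruct (shooting_data_close B c (tau / E) Hc ltac:(apply Rdiv_lt_0_compat; lra))
    as [d [Hd Hd']].
  exists d. split; [exact Hd|]. intros c' Hc' Hcc' x Hx.
  assert (Hdist := solution_distance_bound (- eta * c) (- eta * c') (f c) (p c) (f c') (p c') X B
    ltac:(nra) HX Hxm ltac:(intros y _; split; [apply f_deriv|apply p_deriv])
    ltac:(intros y _; split; [apply f_deriv|apply p_deriv]) x Hx).
  rewrite !f_init, !p_init in Hdist. specialize (Hd' c' Hc' Hcc').
  assert (exp ((3 + 2 * (- eta * c') + L) * X) <= E).
  { unfold E. destruct (Req_dec X 0) as [->|]; [rewrite !Rmult_0_r; lra|].
    destruct (Req_dec c' c_max) as [->|]; [lra|]. left. apply exp_increasing.
    assert (0 < eta * X) by (apply Rmult_lt_0_compat; lra). assert (c_max < c') by lra. nra. }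
  set (S := (theta_s c - theta_s c') ^ 2 + (- eta * c * (theta_s c + r)
    - - eta * c' * (theta_s c' + r)) ^ 2 + (- eta * c - - eta * c') ^ 2 * B ^ 2) in *.
  assert (0 <= S).
  { pose proof (pow2_ge_0 (theta_s c - theta_s c')).
    pose proof (pow2_ge_0 (- eta * c * (theta_s c + r) - - eta * c' * (theta_s c' + r))).
    pose proof (Rmult_le_pos _ _ (pow2_ge_0 (- eta * c - - eta * c')) (pow2_ge_0 B)).
    unfold S. lra. }
  eapply Rle_lt_trans; [exact Hdist|].
  apply Rle_lt_trans with (E * S); [now apply Rmult_le_compat_r|].
  apply Rlt_le_trans with (E * (tau / E)); [now apply Rmult_lt_compat_l|right; field; lra].
Qed.

Lemma flux_reverses_open c : c_max <= c <= 0 -> flux_reverses (f c) (p c) ->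
  exists d, 0 < d /\ forall c', c_max <= c' <= 0 -> Rabs (c' - c) < d -> flux_reverses (f c') (p c').
Proof.
  intros Hc [x [Hx [Hpx Hfx]]].
  destruct (continuity_ab_maj (f c) 0 x Hx) as [xm [Hxm Hxm_range]].
  { intros y _. exact (is_derive_continuity_pt _ _ _ (f_deriv c y)). }
  assert (Hfm : f c xm < 1) by (apply Hfx; lra).
  pose proof (Rmin_l (- p c x) (1 - f c xm)). pose proof (Rmin_r (- p c x) (1 - f c xm)).
  set (mu := Rmin (- p c x) (1 - f c xm)) in *.
  assert (Hmu : 0 < mu) by (apply Rmin_glb_lt; lra).
  destruct (shooting_solutions_close c x (mu ^ 2) Hc Hx ltac:(nra)) as [d [Hd Hd']].
  exists d. split; [exact Hd|]. intros c' Hc' Hcc'. exists x. split; [exact Hx|]. split.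
  - destruct (abs_lt_of_sum_sq_lt _ _ mu Hmu (Hd' c' Hc' Hcc' x ltac:(lra))) as [_ Hq].
    apply Rabs_def2 in Hq. lra.
  - intros y Hy. destruct (abs_lt_of_sum_sq_lt _ _ mu Hmu (Hd' c' Hc' Hcc' y Hy)) as [Hq _].
    apply Rabs_def2 in Hq. specialize (Hxm y Hy). lra.
Qed.

Lemma overshoots_open c : c_max <= c <= 0 -> overshoots (f c) (p c) ->
  exists d, 0 < d /\ forall c', c_max <= c' <= 0 -> Rabs (c' - c) < d -> overshoots (f c') (p c').
Proof.
  intros Hc [x [Hx [Hfx Hpx]]].
  destruct (continuity_ab_min (p c) 0 x Hx) as [xm [Hxm Hxm_range]].
  { intros y _. exact (is_derive_continuity_pt _ _ _ (p_deriv c y)). }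
  assert (Hpm : 0 < p c xm) by (apply Hpx; lra).
  pose proof (Rmin_l (f c x - 1) (p c xm)). pose proof (Rmin_r (f c x - 1) (p c xm)).
  set (mu := Rmin (f c x - 1) (p c xm)) in *.
  assert (Hmu : 0 < mu) by (apply Rmin_glb_lt; lra).
  destruct (shooting_solutions_close c x (mu ^ 2) Hc Hx ltac:(nra)) as [d [Hd Hd']].
  exists d. split; [exact Hd|]. intros c' Hc' Hcc'. exists x. split; [exact Hx|]. split.
  - destruct (abs_lt_of_sum_sq_lt _ _ mu Hmu (Hd' c' Hc' Hcc' x ltac:(lra))) as [Hq _].
    apply Rabs_def2 in Hq. lra.
  - intros y Hy. destruct (abs_lt_of_sum_sq_lt _ _ mu Hmu (Hd' c' Hc' Hcc' y Hy)) as [_ Hq].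
    apply Rabs_def2 in Hq. specialize (Hxm y Hy). lra.
Qed.

Lemma overshoots_at_c_max : overshoots (f c_max) (p c_max).
Proof.
  assert (Hp0 : 0 < p c_max 0) by (rewrite p_init, ts_c_max; apply Rmult_lt_0_compat; nra).
  destruct (continuity_pt_gt _ 0 0 (is_derive_continuity_pt _ _ _ (p_deriv c_max 0)) Hp0)
    as [d [Hd Hd']].
  destruct (deriv_pos_right (f c_max) 0 (p c_max 0) d (f_deriv c_max 0) Hp0 Hd) as [y [Hy Hfy]].
  exists y. split; [lra|]. split; [rewrite f_init, ts_c_max in Hfy; exact Hfy|].
  intros z Hz. apply Hd'. rewrite Rminus_0_r, Rabs_right; lra.
Qed.

Lemma flux_reverses_at_0 : flux_reverses (f 0) (p 0).
Proof.
  assert (Hf0 : f 0 0 = 0) by (rewrite f_init; exact ts_0).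
  assert (Hp0 : p 0 0 = 0) by (rewrite p_init; ring).
  destruct (continuity_pt_lt _ 0 1 (is_derive_continuity_pt _ _ _ (f_deriv 0 0))) as [d [Hd Hd']];
    [lra|].
  destruct (deriv_neg_right (p 0) 0 _ d (p_deriv 0 0)) as [y [Hy Hpy]]; [|exact Hd|].
  { rewrite Hp0, Hf0. pose proof (P_pos 0 ltac:(lra)). lra. }
  exists y. split; [lra|]. split; [lra|].
  intros z Hz. apply Hd'. rewrite Rminus_0_r, Rabs_right; lra.
Qed.

Theorem exists_front_velocity : exists c, c_max < c < 0 /\ gas_front (- eta * c) (f c) (p c).
Proof.
  destruct (connected_interval_gap (fun c => flux_reverses (f c) (p c))
    (fun c => overshoots (f c) (p c)) c_max 0 c_max_neg overshoots_at_c_max flux_reverses_at_0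
    flux_reverses_open overshoots_open
    (fun c _ => flux_reverses_overshoots_exclusive (f c) (p c))) as [c [Hc [Hnrev Hnover]]].
  assert (Hc' : c_max < c < 0).
  { split; apply Rnot_le_lt; intros Hle.
    - apply Hnover. replace c with c_max by lra. apply overshoots_at_c_max.
    - apply Hnrev. replace c with 0 by lra. apply flux_reverses_at_0. }
  assert (Hts1 : theta_s c < 1) by (rewrite <- ts_c_max; apply ts_decr; lra).
  assert (Hts0 : 0 < theta_s c) by (rewrite <- ts_0; apply ts_decr; lra).
  assert (Ha : 0 < - eta * c) by nra.
  exists c. split; [exact Hc'|].
  apply (trapped_front (- eta * c) (f c) (p c) (f_deriv c) (p_deriv c) Ha);
    [|rewrite f_init; lra].
  apply (trapped_of_no_exit (- eta * c) (f c) (p c) (f_deriv c) (p_deriv c));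
    [lra|rewrite f_init; lra| |exact Hnrev|exact Hnover].
  rewrite p_init. apply Rmult_lt_0_compat; lra.
Qed.

End Shooting.

(** * Reduction of the interface problem to a gas-phase front *)

Section Interface.

Variables (eta Qg Qp : R) (Psi theta_s : R -> R) (c_max : R).
Hypothesis P_Psi : forall u, 0 <= u <= 1 -> P u = Psi u.
Hypothesis eta_pos : 0 < eta.
Hypothesis Qp_gt : - Qg < Qp.
Hypothesis Qp_neg : Qp < 0.
Hypothesis c_max_neg : c_max < 0.
Hypothesis ts_range : forall c, c_max <= c <= 0 -> 0 <= theta_s c <= 1.
Hypothesis ts_cont : continuous_on_closed theta_s c_max 0.
Hypothesis ts_decr : strictly_decreasing_on theta_s c_max 0.
Hypothesis ts_0 : theta_s 0 = 0.
Hypothesis ts_c_max : theta_s c_max = 1.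

(* [- Qp / (Qp + Qg)] is the offset [r > 0] in the gas-side boundary condition [p(0) = a (theta_s + r)]. *)
Lemma pyrolysis_offset_pos : 0 < - Qp / (Qp + Qg).
Proof. apply Rdiv_lt_0_compat; lra. Qed.

Lemma Pc_solution_front c theta : c <= 0 -> Pc_solution eta Qg Qp Psi theta_s c theta ->
  exists f p, gas_front (- eta * c) f p /\ f 0 = theta_s c /\
    p 0 = - eta * c * (theta_s c + - Qp / (Qp + Qg)).
Proof.
  intros Hc [Hr [_ [thm [thp [C2m [C2p [Em [Ep [Om [Op [Lm [T0 [Lp [_ [LDp Hheat]]]]]]]]]]]]]]].
  assert (Hm0 : thm 0 = theta_s c) by (rewrite Em by lra; exact T0).
  assert (Hp0 : thp 0 = theta_s c) by (rewrite Ep by lra; exact T0).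
  assert (Dm : Derive thm 0 = - c * theta_s c).
  { rewrite <- Hm0. apply (solid_flux_at_interface c thm Hc C2m Om).
    - intros x Hx. rewrite Em by exact Hx. apply Hr.
    - exact (is_lim_m_infty_restrict thm theta 0 Em Lm). }
  assert (Hd : forall x, is_derive thp x (Derive thp x)) by (intros x; apply Derive_correct, C2p).
  assert (Hdd : forall x, is_derive (Derive thp) x (Derive (Derive thp) x))
    by (intros x; apply Derive_correct, C2p).
  assert (Hrange : forall x, 0 <= x -> 0 <= thp x <= 1) by (intros x Hx; rewrite Ep by exact Hx; apply Hr).
  assert (Hode : forall x, 0 < x ->
      Derive (Derive thp) x = - eta * c * Derive thp x - P (thp x)).
  { intros x Hx. rewrite P_Psi by (apply Hrange; lra). rewrite Ep by lra. specialize (Op x Hx). lra. }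
  exists thp, (Derive thp). split; [split; [exact Hd|split; [|split; [exact Hrange|split]]]|split].
  - intros x Hx. destruct (Req_dec x 0) as [->|Hx0]; [|rewrite <- Hode by lra; apply Hdd].
    replace (- eta * c * Derive thp 0 - P (thp 0)) with (Derive (Derive thp) 0); [apply Hdd|].
    apply (continuity_pt_eq_of_adherent (Derive (Derive thp))
      (fun x => - eta * c * Derive thp x - P (thp x)) 0).
    + apply continuity_pt_filterlim, C2p.
    + apply continuity_pt_minus; [apply continuity_pt_scal|apply (continuity_pt_comp thp P)];
        [exact (is_derive_continuity_pt _ _ _ (Hdd 0))|exact (is_derive_continuity_pt _ _ _ (Hd 0))|apply P_continuity].
    + intros d Hd0. exists (d / 2). split; [rewrite Rminus_0_r, Rabs_right; lra|]. apply Hode. lra.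
  - exact (is_lim_p_infty_restrict thp theta 1 Ep Lp).
  - exact LDp.
  - exact Hp0.
  - unfold S_heat in Hheat. rewrite Dm in Hheat.
    replace (Derive thp 0) with (eta * (Qp / (Qp + Qg)) * c + eta * (- c * theta_s c)) by lra.
    field. lra.
Qed.


Lemma Pc_velocity_interior c : c_max <= c <= 0 -> Pc_solvable eta Qg Qp Psi theta_s c ->
  c_max < c < 0 /\ exists f p, gas_front (- eta * c) f p /\ f 0 = theta_s c /\
    p 0 = - eta * c * (theta_s c + - Qp / (Qp + Qg)).
Proof.
  intros Hc [theta Hsol]. pose proof pyrolysis_offset_pos as Hr.
  destruct (Pc_solution_front c theta ltac:(lra) Hsol) as [f [p [Hfront [Hf0 Hp0]]]].
  split; [|now exists f, p]. split; apply Rnot_le_lt; intros Hle.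
  - replace c with c_max in * by lra. rewrite ts_c_max in Hf0, Hp0.
    assert (Hpos : 0 < p 0) by (rewrite Hp0; apply Rmult_lt_0_compat; nra).
    pose proof (front_start_below_one _ f p Hfront Hpos). lra.
  - replace c with 0 in * by lra. rewrite ts_0 in Hf0, Hp0.
    pose proof (front_flux_pos (- eta * 0) f p ltac:(lra) Hfront ltac:(lra) 0 (Rle_refl 0)).
    rewrite Hp0 in *. nra.
Qed.

Lemma Pc_velocity_unique c1 c2 : c_max <= c1 <= 0 -> c_max <= c2 <= 0 ->
  Pc_solvable eta Qg Qp Psi theta_s c1 -> Pc_solvable eta Qg Qp Psi theta_s c2 -> c1 = c2.
Proof.
  intros Hc1 Hc2 S1 S2. pose proof pyrolysis_offset_pos as Hr.
  destruct (Pc_velocity_interior c1 Hc1 S1) as [O1 [f1 [p1 [F1 [Hf1 Hp1]]]]].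
  destruct (Pc_velocity_interior c2 Hc2 S2) as [O2 [f2 [p2 [F2 [Hf2 Hp2]]]]].
  assert (Hwlog : forall c c' f p f' p', c_max < c < 0 -> c_max < c' < 0 -> c < c' ->
    gas_front (- eta * c) f p -> f 0 = theta_s c -> p 0 = - eta * c * (theta_s c + - Qp / (Qp + Qg)) ->
    gas_front (- eta * c') f' p' -> f' 0 = theta_s c' ->
    p' 0 = - eta * c' * (theta_s c' + - Qp / (Qp + Qg)) -> False).
  { intros c c' f p f' p' Hc Hc' Hlt F Hf Hp F' Hf' Hp'.
    apply (fronts_not_ordered (- eta * c) (- eta * c') (- Qp / (Qp + Qg)) f p f' p'); try lra;
      try assumption; try nra.
    - rewrite Hf, Hf'. apply ts_decr; lra.
    - rewrite Hf, <- ts_c_max. apply ts_decr; lra. }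
  destruct (Rtotal_order c1 c2) as [Hlt|[Heq|Hgt]]; [exfalso|exact Heq|exfalso].
  - exact (Hwlog c1 c2 f1 p1 f2 p2 O1 O2 Hlt F1 Hf1 Hp1 F2 Hf2 Hp2).
  - exact (Hwlog c2 c1 f2 p2 f1 p1 O2 O1 Hgt F2 Hf2 Hp2 F1 Hf1 Hp1).
Qed.

(* Glue the explicit solid profile [theta_s e^(-c x)] to the gas front at [x = 0]. *)
Lemma front_Pc_solvable c f p : c_max <= c < 0 ->
  (forall x, is_derive p x (- eta * c * p x - P (f x))) -> gas_front (- eta * c) f p ->
  f 0 = theta_s c -> p 0 = - eta * c * (theta_s c + - Qp / (Qp + Qg)) ->
  Pc_solvable eta Qg Qp Psi theta_s c.
Proof.
  intros Hc Hp [Hf [_ [Hfr [Lf Lp]]]] Hf0 Hp0.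
  pose proof (ts_range c ltac:(lra)) as Hts.
  set (thm := fun x => theta_s c * exp (- c * x)).
  assert (Hthm0 : thm 0 = theta_s c) by (unfold thm; rewrite Rmult_0_r, exp_0; ring).
  assert (Hthm : forall x, x <= 0 -> 0 <= thm x <= 1).
  { intros x Hx. unfold thm. pose proof (exp_pos (- c * x)).
    assert (exp (- c * x) <= 1).
    { rewrite <- exp_0. destruct (Req_dec x 0) as [->|]; [rewrite Rmult_0_r; lra|].
      left. apply exp_increasing. nra. }
    split; [apply Rmult_le_pos|apply Rle_trans with (1 * 1); [apply Rmult_le_compat|]]; lra. }
  assert (Dp1 : Derive f = p) by (apply functional_extensionality; intros x; now apply is_derive_unique).
  assert (Dp2 : Derive p = fun x => - eta * c * p x - P (f x))
    by (apply functional_extensionality; intros x; now apply is_derive_unique).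
  assert (Hglue : forall x, 0 <= x -> f x = if Rle_dec x 0 then thm x else f x).
  { intros x Hx. destruct (Rle_dec x 0); [|reflexivity].
    replace x with 0 by lra. rewrite Hthm0, Hf0. reflexivity. }
  exists (fun x => if Rle_dec x 0 then thm x else f x). split; [|split].
  - intros x. destruct (Rle_dec x 0) as [Hx|Hx]; [apply Hthm, Hx|apply Hfr; lra].
  - apply continuous_glue_at_0; [|exact (fun x => is_derive_continuity_pt _ _ _ (Hf x))|].
    + intros x. apply is_derive_continuity_pt with (- c * theta_s c * exp (- c * x)).
      unfold thm. auto_derive; [exact I|ring].
    + rewrite Hthm0. auto.
  - exists thm, f. split; [apply exp_profile_C2|]. split; [exact (gas_solution_C2 _ f p Hf Hp)|].
    split; [intros x Hx; now destruct (Rle_dec x 0)|]. split; [exact Hglue|].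
    unfold thm. rewrite Derive_exp_profile, Derive_exp_profile. repeat split.
    + intros x Hx. ring.
    + intros x Hx. rewrite Dp1, Dp2. destruct (Rle_dec x 0); [lra|].
      rewrite <- P_Psi by (apply Hfr; lra). ring.
    + apply (is_lim_m_infty_restrict _ thm); [intros x Hx; now destruct (Rle_dec x 0)|].
      apply is_lim_exp_profile. lra.
    + destruct (Rle_dec 0 0); [exact Hthm0|lra].
    + exact (is_lim_p_infty_restrict _ f 1 (fun x Hx => eq_sym (Hglue x Hx)) Lf).
    + apply is_lim_exp_profile. lra.
    + now rewrite Dp1.
    + rewrite Dp1, Hp0. unfold S_heat. rewrite Rmult_0_r, exp_0. field. lra.
Qed.

Lemma Pc_solvable_exists : exists c, c_max <= c <= 0 /\ Pc_solvable eta Qg Qp Psi theta_s c.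
Proof.
  pose proof pyrolysis_offset_pos as Hr. set (r := - Qp / (Qp + Qg)) in *.
  set (sol := fun c => epsilon (inhabits (fun _ : R => 0, fun _ : R => 0))
    (fun fp : (R -> R) * (R -> R) => (forall x, is_derive (fst fp) x (snd fp x)) /\
       (forall x, is_derive (snd fp) x (- eta * c * snd fp x - P (fst fp x))) /\
       fst fp 0 = theta_s c /\ snd fp 0 = - eta * c * (theta_s c + r))).
  assert (Hsol : forall c, (forall x, is_derive (fst (sol c)) x (snd (sol c) x)) /\
       (forall x, is_derive (snd (sol c)) x (- eta * c * snd (sol c) x - P (fst (sol c) x))) /\
       fst (sol c) 0 = theta_s c /\ snd (sol c) 0 = - eta * c * (theta_s c + r)).
  { intros c. apply epsilon_spec.
    destruct (gas_solution_exists (- eta * c) (theta_s c) (- eta * c * (theta_s c + r)))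
      as [f [p Hfp]].
    now exists (f, p). }
  clearbody sol.
  destruct (exists_front_velocity eta r c_max theta_s eta_pos ltac:(lra) c_max_neg ts_cont ts_range
    ts_decr ts_0 ts_c_max (fun c => fst (sol c)) (fun c => snd (sol c))) as [c [Hc Hfront]];
    try (intros; apply Hsol).
  exists c. split; [lra|].
  destruct (Hsol c) as [_ [Hp [Hf0 Hp0]]].
  now apply (front_Pc_solvable c (fst (sol c)) (snd (sol c))); [lra| | | |].
Qed.

Theorem Pc_velocity_exists_unique :
  exists! c, c_max <= c <= 0 /\ Pc_solvable eta Qg Qp Psi theta_s c.
Proof.
  destruct Pc_solvable_exists as [c [Hc Hs]]. exists c. split; [split; assumption|].
  intros c' [Hc' Hs']. exact (Pc_velocity_unique c c' Hc Hc' Hs Hs').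
Qed.

End Interface.

End GasEquation.

Theorem proposition7
  (eta Qg Qp : R) (Psi : R -> R) (c_max : R) (theta_s : R -> R)
  (Heta : 0 < eta) (HQg : 0 < Qg)
  (HQp1 : - Qg < Qp) (HQp2 : Qp < 0)
  (HPsi_smooth : exists Psie : R -> R, smooth Psie /\
                   forall x, 0 <= x <= 1 -> Psie x = Psi x)
  (HPsi_nonneg : forall x, 0 <= x <= 1 -> 0 <= Psi x)
  (HPsi_pos : forall x, 0 <= x < 1 -> 0 < Psi x)
  (HPsi1 : Psi 1 = 0)
  (Hcmax : c_max < 0)
  (Hts_range : forall c, c_max <= c <= 0 -> 0 <= theta_s c <= 1)
  (Hts_cont : continuous_on_closed theta_s c_max 0)
  (Hts_decr : strictly_decreasing_on theta_s c_max 0)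
  (Hts0 : theta_s 0 = 0)
  (Hts_cmax : theta_s c_max = 1)
  (Hts_smooth : exists g : R -> R, smooth_neg g /\
                  (forall c, c_max <= c < 0 -> g c = theta_s c) /\
                  (forall c, c_max <= c < 0 -> Derive g c < 0)) :
  exists! c : R, c_max <= c <= 0 /\ Pc_solvable eta Qg Qp Psi theta_s c.
Proof.
  destruct HPsi_smooth as [Psie [Hsmooth HPsie]].
  destruct (smooth_lipschitz_on_01 Psie Hsmooth) as [L [HL Hlip]].
  set (P := fun u => Psie (clamp01 u)).
  assert (P_Psi : forall u, 0 <= u <= 1 -> P u = Psi u)
    by (intros u Hu; unfold P; rewrite clamp01_id by exact Hu; now apply HPsie).
  assert (P_clamp : forall u, P u = Psi (clamp01 u))
    by (intros u; unfold P; apply HPsie, clamp01_range).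
  apply (Pc_velocity_exists_unique P L); auto.
  - intros u. rewrite P_clamp. apply HPsi_nonneg, clamp01_range.
  - intros u Hu. rewrite P_clamp. apply HPsi_pos.
    split; [apply clamp01_range|now apply clamp01_lt_1].
  - rewrite P_Psi by lra. exact HPsi1.
  - intros u v. unfold P. eapply Rle_trans; [apply Hlip; apply clamp01_range|].
    apply Rmult_le_compat_l; [exact HL|apply clamp01_lipschitz].
Qed.
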